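(* Let $k\ge2$ be an integer, $s_0\in(0,1)$, $i_0\in(0,1)$, $\tau,\eta,\lambda>0$, $f(v):=s_0(1-e^{-\tau v})-\eta v$ and $\mathscr{R}_0:=s_0\tau/\eta$. Assume $\mathscr{R}_0>1$ and $0<\lambda<\lambda_c$, where $\lambda_c:=\frac{\eta(\mathscr{R}_0-1)}{k+1-2\sqrt{k}}$. Define $$c_*^k:=\min_{\gamma>0}\frac{\eta(\mathscr{R}_0-1)+\lambda\left(e^{\gamma}-(k+1)+ke^{-\gamma}\right)}{\gamma}>0.$$ Let $(\mathcal{I}_n^\infty)_{n\ge1}$ be the unique positive bounded solution of $0=f(\mathcal{I}_n)+\lambda(\mathcal{I}_{n-1}-(k+1)\mathcal{I}_n+k\mathcal{I}_{n+1})$ for $n\ge2$, $0=f(\mathcal{I}_1)+i_0+\lambda(k+1)(-\mathcal{I}_1+\mathcal{I}_2)$, and let $(\mathcal{I}_n(t))_{n\ge1}$ solve $$\begin{cases}\mathcal{I}_n'(t)=f(\mathcal{I}_n(t))+\lambda\left(\mathcal{I}_{n-1}(t)-(k+1)\mathcal{I}_n(t)+k\mathcal{I}_{n+1}(t)\right), & n\ge2,\\ \mathcal{I}_1'(t)=f(\mathcal{I}_1(t))+i_0+\lambda(k+1)\left(-\mathcal{I}_1(t)+\mathcal{I}_2(t)\right),\end{cases}\qquad \mathcal{I}_n(0)=0\ \forall n\ge1.$$ Then: (i) for every $c\in(0,c_*^k)$, $\lim_{t\to+\infty}\sup_{1\le n\le ct}|\mathcal{I}_n(t)-\mathcal{I}_n^\infty|=0$;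 (ii) for every $c>c_*^k$, $\lim_{t\to+\infty}\sup_{n\ge ct}|\mathcal{I}_n(t)|=0$.
   Context: The system describes the cumulative density of infected individuals in an SIR model on the homogeneous tree of degree $k$ with infection initially only at the root, $\mathcal{I}_n$ being the common value at vertices at distance $n-1$ from the root. *)

From Stdlib Require Import Reals Lra.
From Coquelicot Require Import Coquelicot.
Open Scope R_scope.

Definition freact (s0 tau eta v : R) : R := s0 * (1 - exp (- tau * v)) - eta * v.

Definition repro (s0 tau eta : R) : R := s0 * tau / eta.

Definition lambda_c (k : nat) (s0 tau eta : R) : R :=
  eta * (repro s0 tau eta - 1) / (INR k + 1 - 2 * sqrt (INR k)).

Definition speed_fun (k : nat) (s0 tau eta lambda gamma : R) : R :=
  (eta * (repro s0 tau eta - 1)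
   + lambda * (exp gamma - (INR k + 1) + INR k * exp (- gamma))) / gamma.

(* c_*^k := min_{gamma > 0} speed_fun gamma, written as the infimum
   (the minimum when it is attained) *)
Definition c_star (k : nat) (s0 tau eta lambda : R) : R :=
  real (Glb_Rbar (fun y => exists gamma, 0 < gamma /\ y = speed_fun k s0 tau eta lambda gamma)).

From Stdlib Require Import Reals Lra Lia Classical.
From Coquelicot Require Import Coquelicot.
Open Scope R_scope.

(* Everything rests on a comparison principle for the cooperative lattice system, proved
   with the barrier [eps e^(K t) (1 + n)] and a first-touching-time argument.
   (ii) For [c > c_*], choose [gamma] with [speed_fun gamma < c' < c]: then
   [A e^(gamma (c' t - n))] is a supersolution ([A] absorbs the source at the root), so
   [I_n(t)] is exponentially small on [n >= c t].
   (i) For [c < c1 < c_*], the linearisation at [0] has a complex exponential solution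
   [e^(-al y) sin (be y)], [y = n - c1 t]; a small multiple of its first arch is a
   subsolution, which, with the monotonicity of [I] in time, bounds [I] below by some [dl > 0]
   on [n <= c1 t]. Then, by the strict concavity of [f], [th(t) I^inf - zeta] is a subsolution
   when [th] increases from [dl / M] to [1 - eps] and [zeta] is an exponentially small
   correction ahead of [c1 t]; it lifts [I] to [I^inf - eps] on [n <= c t], while
   [I <= I^inf] by comparison. *)

Lemma exp_le_mono (x y : R) : x <= y -> exp x <= exp y.
Proof.
  intros Hxy. destruct (Rle_lt_or_eq_dec x y Hxy) as [Hlt| ->]; [|lra].
  left; apply exp_increasing, Hlt.
Qed.

Lemma mul_exp_le_of_le_ln (A e x : R) : 0 < A -> 0 < e -> x <= ln (e / A) -> A * exp x <= e.
Proof.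
  intros HA He Hx. apply exp_le_mono in Hx. rewrite exp_ln in Hx by (apply Rdiv_lt_0_compat; assumption).
  apply Rmult_le_compat_l with (r := A) in Hx; [|lra].
  replace (A * (e / A)) with e in Hx by (field; lra). exact Hx.
Qed.

Lemma exp_convex (p a b : R) : 0 <= p <= 1 ->
  exp (p * a + (1 - p) * b) <= p * exp a + (1 - p) * exp b.
Proof.
  intros Hp. set (m := p * a + (1 - p) * b).
  assert (Ha : exp m * (1 + (a - m)) <= exp a).
  { replace a with (m + (a - m)) at 2 by ring. rewrite exp_plus.
    apply Rmult_le_compat_l; [left; apply exp_pos|apply exp_ineq1_le]. }
  assert (Hb : exp m * (1 + (b - m)) <= exp b).
  { replace b with (m + (b - m)) at 2 by ring. rewrite exp_plus.
    apply Rmult_le_compat_l; [left; apply exp_pos|apply exp_ineq1_le]. }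
  assert (exp m = p * (exp m * (1 + (a - m))) + (1 - p) * (exp m * (1 + (b - m)))).
  { unfold m. ring. }
  nra.
Qed.

Lemma exp_opp_le_quadratic (x : R) : 0 <= x -> exp (- x) <= 1 - x + x * x.
Proof.
  intros Hx.
  assert (Hsq : (1 + x / 2) * (1 + x / 2) <= exp x).
  { replace x with (x / 2 + x / 2) at 3 by field. rewrite exp_plus.
    pose proof (exp_ineq1_le (x / 2)). apply Rmult_le_compat; lra. }
  rewrite exp_Ropp.
  apply (Rmult_le_reg_l (exp x)); [apply exp_pos|].
  rewrite Rinv_r by (apply Rgt_not_eq, exp_pos).
  assert (0 <= x * x * x) by (repeat apply Rmult_le_pos; lra).
  assert (1 <= (1 + x / 2) * (1 + x / 2) * (1 - x + x * x)) by nra.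
  assert (0 <= 1 - x + x * x) by nra.
  nra.
Qed.

Lemma exp_add_mul_exp_opp_ge (k : nat) (g : R) : 2 * sqrt (INR k) <= exp g + INR k * exp (- g).
Proof.
  pose proof (pos_INR k).
  set (p := exp (g / 2)). set (m := exp (- g / 2)).
  assert (Hp : p * p = exp g) by (unfold p; rewrite <- exp_plus; f_equal; field).
  assert (Hm : m * m = exp (- g)) by (unfold m; rewrite <- exp_plus; f_equal; field).
  assert (Hpm : p * m = 1).
  { unfold p, m. rewrite <- exp_plus. replace (g / 2 + - g / 2) with 0 by field. apply exp_0. }
  assert (Hs : sqrt (INR k) * sqrt (INR k) = INR k) by (apply sqrt_sqrt; assumption).
  set (r := sqrt (INR k)) in *.
  assert (Hsq : (p - r * m) * (p - r * m) = p * p - 2 * r * (p * m) + (r * r) * (m * m)) by ring.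
  rewrite Hp, Hm, Hpm, Hs in Hsq.
  pose proof (Rle_0_sqr (p - r * m)). unfold Rsqr in *. lra.
Qed.

Lemma derive_nonneg_of_left_lt (h : R -> R) (t d r : R) : 0 < r ->
  derivable_pt_lim h t d -> (forall s, t - r < s < t -> h s < h t) -> 0 <= d.
Proof.
  intros Hr Hd Hs. apply Rnot_lt_le. intros Hneg.
  destruct (Hd (- d / 2)) as [del Hdel]; [lra|].
  pose proof (cond_pos del) as Hdel0.
  set (e := - Rmin del r / 2).
  assert (Hm : 0 < Rmin del r) by (apply Rmin_pos; assumption).
  pose proof (Rmin_l del r). pose proof (Rmin_r del r).
  assert (He : e < 0) by (unfold e; lra).
  specialize (Hdel e (Rlt_not_eq _ _ He) ltac:(rewrite Rabs_left; unfold e; lra)).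
  assert (Hlt : h (t + e) < h t) by (apply Hs; unfold e; lra).
  assert (Hq : 0 < (h (t + e) - h t) / e).
  { replace ((h (t + e) - h t) / e) with ((h t - h (t + e)) / (- e)) by (field; lra).
    apply Rdiv_lt_0_compat; lra. }
  apply Rabs_def2 in Hdel. lra.
Qed.

Lemma derivable_pt_lim_shift (g : R -> R) (h s d : R) :
  derivable_pt_lim g (s + h) d -> derivable_pt_lim (fun s => g (s + h)) s d.
Proof.
  intros Hg. replace d with (d * 1) by ring.
  apply (derivable_pt_lim_comp (fun s => s + h) g); [|exact Hg].
  replace 1 with (1 + 0) by ring.
  apply derivable_pt_lim_plus; [apply derivable_pt_lim_id|apply derivable_pt_lim_const].
Qed.

Lemma is_lim_lt_right (f : R -> R) (x l a : R) : is_lim f x l -> l < a ->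
  exists d, 0 < d /\ forall y, x < y < x + d -> f y < a.
Proof.
  intros Hf Hla. apply is_lim_spec in Hf.
  destruct (Hf (mkposreal (a - l) ltac:(lra))) as [d Hd]. simpl in Hd.
  exists d. split; [apply cond_pos|]. intros y Hy.
  assert (Hball : ball x d y).
  { unfold ball; simpl; unfold AbsRing_ball, abs, minus, plus, opp; simpl.
    rewrite Rabs_right; lra. }
  specialize (Hd y Hball ltac:(lra)). apply Rabs_def2 in Hd. lra.
Qed.

Lemma pos_of_deriv_bound (g F : R -> R) (q : R) :
  (forall t, 0 < t -> derivable_pt_lim g t (F t)) ->
  (forall t, 0 < t -> 0 <= g t) ->
  (forall t, 0 < t -> 0 < F t + q * g t) ->
  forall t, 0 < t -> 0 < g t.
Proof.
  intros Hd Hnn Hpos t Ht.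
  set (h := fun s => exp (q * s) * g s).
  set (dh := fun s => exp (q * s) * (F s + q * g s)).
  assert (Hder : forall s, 0 < s -> derivable_pt_lim h s (dh s)).
  { intros s Hs. unfold h, dh.
    replace (exp (q * s) * (F s + q * g s)) with (q * exp (q * s) * g s + exp (q * s) * F s) by ring.
    apply (derivable_pt_lim_mult (fun s => exp (q * s)) g); [|apply Hd, Hs].
    apply is_derive_Reals. auto_derive; [exact I|ring]. }
  destruct (MVT_gen h (t / 2) t dh) as [c [Hc Heq]].
  - intros x Hx. rewrite Rmin_left in Hx by lra. apply is_derive_Reals, Hder. lra.
  - intros x Hx. rewrite Rmin_left in Hx by lra.
    apply derivable_continuous_pt. exists (dh x). apply Hder. lra.
  - rewrite Rmin_left, Rmax_right in Hc by lra.
    assert (0 < dh c) by (apply Rmult_lt_0_compat; [apply exp_pos|apply Hpos; lra]).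
    assert (0 <= h (t / 2)) by (apply Rmult_le_pos; [left; apply exp_pos|apply Hnn; lra]).
    assert (0 < h t) by nra.
    unfold h in *. pose proof (exp_pos (q * t)).
    destruct (Rle_or_lt (g t) 0); [nra|assumption].
Qed.

Lemma finite_min_pos (g : nat -> R) (N : nat) : (forall n, (1 <= n <= N)%nat -> 0 < g n) ->
  exists d, 0 < d /\ forall n, (1 <= n <= N)%nat -> d <= g n.
Proof.
  induction N as [|N IH]; intros Hpos.
  - exists 1. split; [lra|]. intros; lia.
  - destruct IH as [d [Hd Hle]]; [intros; apply Hpos; lia|].
    exists (Rmin d (g (S N))). split; [apply Rmin_pos; [exact Hd|apply Hpos; lia]|].
    intros n Hn. destruct (Nat.eq_dec n (S N)) as [->|Hne]; [apply Rmin_r|].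
    eapply Rle_trans; [apply Rmin_l|apply Hle; lia].
Qed.

(** * Continuity on [[0, T]] and first crossing times *)

Definition cont_0T (T : R) (g : R -> R) : Prop :=
  forall t, 0 <= t <= T -> forall eps, 0 < eps ->
  exists d, 0 < d /\ forall s, 0 <= s <= T -> Rabs (s - t) < d -> Rabs (g s - g t) < eps.

Lemma continuity_pt_eps (g : R -> R) (x : R) : continuity_pt g x ->
  forall eps, 0 < eps -> exists d, 0 < d /\ forall y, Rabs (y - x) < d -> Rabs (g y - g x) < eps.
Proof.
  intros Hg eps Heps.
  destruct (Hg eps Heps) as [d [Hd Hy]].
  exists d; split; [exact Hd|]. intros y Hyx.
  destruct (Req_dec y x) as [->|Hne].
  - rewrite Rminus_diag, Rabs_R0; exact Heps.
  - apply (Hy y). repeat split; auto.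
Qed.

Lemma cont_0T_minus (T : R) (g1 g2 : R -> R) :
  cont_0T T g1 -> cont_0T T g2 -> cont_0T T (fun t => g1 t - g2 t).
Proof.
  intros H1 H2 t Ht eps Heps.
  destruct (H1 t Ht (eps / 2)) as [d1 [Hd1 A1]]; [lra|].
  destruct (H2 t Ht (eps / 2)) as [d2 [Hd2 A2]]; [lra|].
  exists (Rmin d1 d2); split; [apply Rmin_pos; assumption|].
  intros s Hs Hst.
  specialize (A1 s Hs (Rlt_le_trans _ _ _ Hst (Rmin_l _ _))).
  specialize (A2 s Hs (Rlt_le_trans _ _ _ Hst (Rmin_r _ _))).
  apply Rabs_def2 in A1, A2. apply Rabs_def1; lra.
Qed.

Lemma cont_0T_const (T c : R) : cont_0T T (fun _ => c).
Proof.
  intros t Ht eps Heps. exists 1. split; [lra|].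
  intros. rewrite Rminus_diag, Rabs_R0. exact Heps.
Qed.

Lemma cont_0T_of_right_cont (T : R) (g : R -> R) :
  (forall eps, 0 < eps -> exists d, 0 < d /\ forall t, 0 <= t < d -> Rabs (g t - g 0) < eps) ->
  (forall t, 0 < t -> continuity_pt g t) -> cont_0T T g.
Proof.
  intros H0 Hc t Ht eps Heps.
  destruct (Rle_lt_or_eq_dec 0 t (proj1 Ht)) as [Hpos| <-].
  - destruct (continuity_pt_eps g t (Hc t Hpos) eps Heps) as [d [Hd Hy]].
    exists d; split; auto.
  - destruct (H0 eps Heps) as [d [Hd Hy]]. exists d; split; [exact Hd|].
    intros s Hs Hsd. apply Hy. rewrite Rminus_0_r, Rabs_right in Hsd; lra.
Qed.

Lemma cont_0T_of_continuity (T : R) (g : R -> R) :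
  (forall t, continuity_pt g t) -> cont_0T T g.
Proof.
  intros Hc. apply cont_0T_of_right_cont; [|intros; apply Hc].
  intros eps Heps. destruct (continuity_pt_eps g 0 (Hc 0) eps Heps) as [d [Hd Hy]].
  exists d; split; [exact Hd|]. intros t Ht. apply Hy. rewrite Rminus_0_r, Rabs_right; lra.
Qed.

Lemma cont_0T_shift (T h : R) (g : R -> R) :
  0 <= h -> cont_0T (T + h) g -> cont_0T T (fun s => g (s + h)).
Proof.
  intros Hh Hg t Ht eps Heps.
  destruct (Hg (t + h) ltac:(lra) eps Heps) as [d [Hd Hy]].
  exists d; split; [exact Hd|]. intros s Hs Hst. apply Hy; [lra|].
  replace (s + h - (t + h)) with (s - t) by ring. exact Hst.
Qed.

Lemma cont_0T_neg_near (g : nat -> R -> R) (N : nat) (T t : R) : 0 <= t <= T ->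
  (forall n, (1 <= n <= N)%nat -> cont_0T T (g n)) ->
  (forall n, (1 <= n <= N)%nat -> g n t < 0) ->
  exists d, 0 < d /\ forall s, 0 <= s <= T -> Rabs (s - t) < d ->
    forall n, (1 <= n <= N)%nat -> g n s < 0.
Proof.
  intros Ht. induction N as [|N IH]; intros Hc Hneg.
  - exists 1; split; [lra|]. intros; lia.
  - destruct IH as [d1 [Hd1 H1]]; [intros; apply Hc; lia|intros; apply Hneg; lia|].
    destruct (Hc (S N) ltac:(lia) t Ht (- g (S N) t)) as [d2 [Hd2 H2]].
    { specialize (Hneg (S N) ltac:(lia)); lra. }
    exists (Rmin d1 d2); split; [apply Rmin_pos; assumption|].
    intros s Hs Hst n Hn.
    destruct (Nat.eq_dec n (S N)) as [->|Hne].
    + specialize (H2 s Hs (Rlt_le_trans _ _ _ Hst (Rmin_r _ _))).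
      apply Rabs_def2 in H2. lra.
    + apply H1; [exact Hs| |lia]. exact (Rlt_le_trans _ _ _ Hst (Rmin_l _ _)).
Qed.

Lemma cont_0T_nonpos_of_neg_before (T ts : R) (g : R -> R) : 0 < ts <= T -> cont_0T T g ->
  (forall s, 0 <= s < ts -> g s < 0) -> g ts <= 0.
Proof.
  intros Hts Hg Hbefore. apply Rnot_lt_le. intros Hgt.
  destruct (Hg ts ltac:(lra) (g ts) Hgt) as [d [Hd Hy]].
  set (s := Rmax 0 (ts - d / 2)).
  assert (Hs : 0 <= s < ts) by (split; [apply Rmax_l|apply Rmax_lub_lt; lra]).
  assert (Hsd : Rabs (s - ts) < d).
  { assert (ts - d / 2 <= s) by apply Rmax_r. rewrite Rabs_left; lra. }
  specialize (Hy s ltac:(lra) Hsd). apply Rabs_def2 in Hy.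
  specialize (Hbefore s Hs). lra.
Qed.

Lemma cont_0T_neg_extend (g : nat -> R -> R) (N : nat) (T ts : R) : 0 <= ts < T ->
  (forall n, (1 <= n <= N)%nat -> cont_0T T (g n)) ->
  (forall s, 0 <= s <= ts -> forall n, (1 <= n <= N)%nat -> g n s < 0) ->
  exists s', ts < s' <= T /\ forall s, 0 <= s <= s' -> forall n, (1 <= n <= N)%nat -> g n s < 0.
Proof.
  intros Hts Hc Hneg.
  destruct (cont_0T_neg_near g N T ts ltac:(lra) Hc (Hneg ts ltac:(lra))) as [d [Hd Hnear]].
  assert (Hm : 0 < Rmin d (T - ts)) by (apply Rmin_pos; lra).
  pose proof (Rmin_l d (T - ts)). pose proof (Rmin_r d (T - ts)).
  exists (ts + Rmin d (T - ts) / 2). split; [lra|].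
  intros s Hs n Hn. destruct (Rle_or_lt s ts).
  - apply Hneg; [lra|exact Hn].
  - apply Hnear; [lra| |exact Hn]. rewrite Rabs_right; lra.
Qed.

Lemma first_crossing (g : nat -> R -> R) (N : nat) (T : R) : 0 <= T ->
  (forall n, (1 <= n <= N)%nat -> cont_0T T (g n)) ->
  (forall n, (1 <= n <= N)%nat -> g n 0 < 0) ->
  (forall n t, (1 <= n <= N)%nat -> 0 < t <= T -> g n t = 0 ->
     (forall m, (1 <= m <= N)%nat -> g m t <= 0) ->
     (forall s, 0 <= s < t -> g n s < 0) -> False) ->
  forall n t, (1 <= n <= N)%nat -> 0 <= t <= T -> g n t < 0.
Proof.
  intros HT Hc H0 Hcross.
  set (P := fun t => forall s, 0 <= s <= t -> forall n, (1 <= n <= N)%nat -> g n s < 0).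
  set (E := fun t => 0 <= t <= T /\ P t).
  assert (HE0 : E 0).
  { split; [lra|]. intros s Hs n Hn. replace s with 0 by lra. auto. }
  destruct (completeness E) as [ts [Hub Hlub]].
  { exists T. intros x [Hx _]. lra. }
  { exists 0; exact HE0. }
  assert (Hts : 0 <= ts <= T) by (split; [apply Hub, HE0|apply Hlub; intros x [Hx _]; lra]).
  assert (Hbelow : forall s, 0 <= s < ts -> P s).
  { intros s Hs. apply NNPP. intros HPs.
    assert (Hb : is_upper_bound E s).
    { intros x [Hx HPx]. apply Rnot_lt_le. intros Hsx.
      apply HPs. intros s' Hs'. apply HPx. lra. }
    specialize (Hlub s Hb). lra. }
  assert (Hle : 0 < ts -> forall n, (1 <= n <= N)%nat -> g n ts <= 0).
  { intros Hpos n Hn. apply (cont_0T_nonpos_of_neg_before T ts (g n)); [lra|apply Hc, Hn|].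
    intros s Hs. apply (Hbelow s Hs s); [lra|exact Hn]. }
  assert (HPts : P ts).
  { intros s Hs n Hn. destruct (Rle_lt_or_eq_dec s ts (proj2 Hs)) as [Hlt| ->].
    - apply (Hbelow s); [lra|lra|exact Hn].
    - apply Rnot_le_lt. intros Hge.
      assert (Hpos : 0 < ts).
      { destruct (Rle_lt_or_eq_dec 0 ts (proj1 Hts)) as [|Heq]; [assumption|].
        rewrite <- Heq in Hge. specialize (H0 n Hn). lra. }
      apply (Hcross n ts Hn ltac:(lra)).
      + specialize (Hle Hpos n Hn). lra.
      + exact (Hle Hpos).
      + intros s' Hs'. apply (Hbelow s' Hs' s'); [lra|exact Hn]. }
  assert (HtsT : ts = T).
  { destruct (Rle_lt_or_eq_dec ts T (proj2 Hts)) as [Hlt|]; [exfalso|assumption].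
    destruct (cont_0T_neg_extend g N T ts ltac:(lra) Hc HPts) as [s' [Hs' HPs']].
    assert (HEs : E s') by (split; [lra|exact HPs']).
    specialize (Hub s' HEs). lra. }
  intros n t Hn Ht. subst ts. apply (HPts t); [lra|exact Hn].
Qed.

(** * The comparison principle on the tree *)

(* Level [n] is the sphere of radius [n - 1] around the root: a vertex of level [n >= 2] has
   one neighbour at level [n - 1] and [k] at level [n + 1], the root has [k + 1] children. *)
Definition tree_lap (k : nat) (x : nat -> R) (n : nat) : R :=
  match n with
  | 1%nat => (INR k + 1) * (x 2%nat - x 1%nat)
  | _ => x (n - 1)%nat - (INR k + 1) * x n + INR k * x (S n)
  end.

Lemma tree_lap_minus (k : nat) (x y : nat -> R) (n : nat) :
  tree_lap k (fun m => x m - y m) n = tree_lap k x n - tree_lap k y n.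
Proof. destruct n as [|[|n]]; simpl; ring. Qed.

Lemma tree_lap_scal (k : nat) (c : R) (x : nat -> R) (n : nat) :
  tree_lap k (fun m => c * x m) n = c * tree_lap k x n.
Proof. destruct n as [|[|n]]; simpl; ring. Qed.

Lemma tree_lap_exp_le (k : nat) (n : nat) : (1 <= n)%nat ->
  tree_lap k (fun m => exp (INR m)) n <= 3 * (INR k + 1) * exp (INR n).
Proof.
  intros Hn. pose proof (pos_INR k). pose proof exp_le_3. pose proof (exp_ineq1_le 1).
  assert (Hshift : forall x, exp (x + 1) = exp x * exp 1) by (intros; apply exp_plus).
  destruct n as [|[|n]]; [lia| |]; unfold tree_lap; cbv beta.
  - replace (INR 2) with (INR 1 + 1) by (simpl; ring). rewrite Hshift.
    pose proof (exp_pos (INR 1)).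
    assert (exp (INR 1) * exp 1 - exp (INR 1) <= 3 * exp (INR 1)) by nra.
    replace (3 * (INR k + 1) * exp (INR 1)) with ((INR k + 1) * (3 * exp (INR 1))) by ring.
    apply Rmult_le_compat_l; lra.
  - replace (S (S n) - 1)%nat with (S n) by lia.
    rewrite (S_INR (S (S n))), Hshift, (S_INR (S n)), Hshift.
    set (E := exp (INR (S n))). set (e := exp 1) in *.
    assert (HE : 0 < E) by apply exp_pos.
    assert (INR k * (e * e) <= INR k * (3 * e)) by (apply Rmult_le_compat_l; nra).
    assert (Hin : 1 - (INR k + 1) * e + INR k * (e * e) <= 3 * (INR k + 1) * e) by nra.
    replace (E - (INR k + 1) * (E * e) + INR k * (E * e * e))
      with (E * (1 - (INR k + 1) * e + INR k * (e * e))) by ring.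
    replace (3 * (INR k + 1) * (E * e)) with (E * (3 * (INR k + 1) * e)) by ring.
    apply Rmult_le_compat_l; lra.
Qed.

Lemma tree_lap_le_touching (k : nat) (x y : nat -> R) (n : nat) : (1 <= n)%nat ->
  (forall m, (1 <= m)%nat -> x m <= y m) -> x n = y n -> tree_lap k x n <= tree_lap k y n.
Proof.
  intros Hn Hxy Heq. pose proof (pos_INR k).
  destruct n as [|[|n]]; [lia| |]; simpl.
  - assert (x 2%nat <= y 2%nat) by (apply Hxy; lia). rewrite Heq. nra.
  - replace (n - 0)%nat with n by lia.
    assert (x (S n) <= y (S n)) by (apply Hxy; lia).
    assert (x (S (S (S n))) <= y (S (S (S n)))) by (apply Hxy; lia).
    rewrite Heq. nra.
Qed.

Lemma tree_lap_affine_le (k : nat) (c : R) (n : nat) : 0 <= c -> (1 <= n)%nat ->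
  tree_lap k (fun m => c * (1 + INR m)) n <= c * (INR k + 1).
Proof.
  intros Hc Hn. pose proof (pos_INR k).
  destruct n as [|[|n]]; [lia| |]; unfold tree_lap; cbv beta.
  - simpl INR. nra.
  - replace (S (S n) - 1)%nat with (S n) by lia. rewrite !S_INR. nra.
Qed.

Section LatticeComparison.

Variables (k : nat) (lam L T Bd : R) (w : nat -> R -> R).
Hypotheses (Hlam : 0 <= lam) (HL : 0 <= L) (HT : 0 <= T).
Hypothesis w_bounded : forall n t, (1 <= n)%nat -> 0 <= t <= T -> w n t <= Bd.
Hypothesis w_init : forall n, (1 <= n)%nat -> w n 0 <= 0.
Hypothesis w_cont : forall n, (1 <= n)%nat -> cont_0T T (w n).
Hypothesis w_deriv : forall n t, (1 <= n)%nat -> 0 < t <= T -> 0 < w n t ->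
  exists d, derivable_pt_lim (w n) t d /\ d <= L * w n t + lam * tree_lap k (fun m => w m t) n.

Let K := L + lam * (INR k + 1) + 1.

Let barrier (eps : R) (n : nat) (t : R) : R := eps * exp (K * t) * (1 + INR n).

Lemma barrier_ge (eps : R) (n : nat) (t : R) : 0 < eps -> 0 < eps * exp (K * t) <= barrier eps n t.
Proof.
  intros Heps. pose proof (pos_INR n). pose proof (exp_pos (K * t)).
  assert (0 < eps * exp (K * t)) by (apply Rmult_lt_0_compat; assumption).
  unfold barrier. split; nra.
Qed.

Lemma barrier_deriv (eps : R) (n : nat) (t : R) :
  derivable_pt_lim (barrier eps n) t (K * barrier eps n t).
Proof. apply is_derive_Reals. unfold barrier. auto_derive; [exact I|ring]. Qed.

Lemma barrier_tail (eps : R) : 0 < eps ->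
  exists N, forall n t, (N < n)%nat -> 0 <= t <= T -> w n t < barrier eps n t.
Proof.
  intros Heps. destruct (INR_archimed eps Bd Heps) as [N HN]. exists N.
  intros n t Hn Ht. pose proof (w_bounded n t ltac:(lia) Ht).
  assert (INR N + 1 <= INR n) by (rewrite <- S_INR; apply le_INR; lia).
  assert (1 <= exp (K * t)).
  { rewrite <- exp_0. apply exp_le_mono. apply Rmult_le_pos; [|lra].
    unfold K. pose proof (pos_INR k). nra. }
  assert (0 <= eps * (1 + INR n)) by (pose proof (pos_INR n); nra).
  assert (eps * (1 + INR n) <= barrier eps n t) by (unfold barrier; nra).
  nra.
Qed.

(* At a first touching point the barrier grows at rate [K], faster than [w] can. *)
Lemma barrier_not_touched (eps : R) (n : nat) (ts : R) : 0 < eps -> (1 <= n)%nat -> 0 < ts <= T ->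
  (forall m, (1 <= m)%nat -> w m ts <= barrier eps m ts) -> w n ts = barrier eps n ts ->
  (forall s, 0 <= s < ts -> w n s < barrier eps n s) -> False.
Proof.
  intros Heps Hn Hts Htouch Hwn Hbefore.
  pose proof (barrier_ge eps n ts Heps) as [Hpos Hge].
  destruct (w_deriv n ts Hn Hts ltac:(lra)) as [d [Hd Hdle]].
  assert (Hgd : 0 <= d - K * barrier eps n ts).
  { apply (derive_nonneg_of_left_lt (fun t => w n t - barrier eps n t) ts _ ts ltac:(lra)).
    - apply derivable_pt_lim_minus; [exact Hd|apply barrier_deriv].
    - intros s Hs. rewrite Hwn, Rminus_diag. specialize (Hbefore s ltac:(lra)). lra. }
  assert (Hlap : tree_lap k (fun m => w m ts) n <= eps * exp (K * ts) * (INR k + 1)).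
  { eapply Rle_trans.
    - apply (tree_lap_le_touching k _ (fun m => barrier eps m ts)); assumption.
    - apply tree_lap_affine_le; [lra|exact Hn]. }
  assert (lam * tree_lap k (fun m => w m ts) n <= lam * (barrier eps n ts * (INR k + 1))).
  { apply Rmult_le_compat_l; [exact Hlam|]. pose proof (pos_INR k). nra. }
  rewrite Hwn in Hdle. unfold K in Hgd. nra.
Qed.

Lemma lattice_comparison_barrier (eps : R) : 0 < eps ->
  forall n t, (1 <= n)%nat -> 0 <= t <= T -> w n t < barrier eps n t.
Proof.
  intros Heps. destruct (barrier_tail eps Heps) as [N Htail].
  assert (Hhead : forall n t, (1 <= n <= N)%nat -> 0 <= t <= T -> w n t - barrier eps n t < 0).
  { apply (first_crossing (fun n t => w n t - barrier eps n t) N T HT).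
    - intros n Hn. apply cont_0T_minus; [apply w_cont; lia|].
      apply cont_0T_of_continuity. intros t. apply derivable_continuous_pt.
      eexists. apply barrier_deriv.
    - intros n Hn. specialize (w_init n ltac:(lia)). pose proof (barrier_ge eps n 0 Heps). lra.
    - intros n ts Hn Hts Hzero Hle Hbefore.
      apply (barrier_not_touched eps n ts Heps ltac:(lia) Hts); [|lra|].
      2: intros s Hs; specialize (Hbefore s Hs); lra.
      intros m Hm. destruct (Nat.le_gt_cases m N) as [HmN|HmN].
      + specialize (Hle m ltac:(lia)). lra.
      + left. apply Htail; [exact HmN|lra]. }
  intros n t Hn Ht. destruct (Nat.le_gt_cases n N) as [HnN|HnN].
  - specialize (Hhead n t ltac:(lia) Ht). lra.
  - exact (Htail n t HnN Ht).
Qed.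

Lemma lattice_comparison : forall n t, (1 <= n)%nat -> 0 <= t <= T -> w n t <= 0.
Proof.
  intros n t Hn Ht. apply Rle_plus_epsilon. intros eps Heps.
  set (D := exp (K * t) * (1 + INR n)).
  assert (HD : 0 < D) by (apply Rmult_lt_0_compat; [apply exp_pos|pose proof (pos_INR n); lra]).
  assert (HeD : 0 < eps / D) by (apply Rdiv_lt_0_compat; assumption).
  pose proof (lattice_comparison_barrier (eps / D) HeD n t Hn Ht) as Hw. unfold barrier in Hw.
  replace (eps / D * exp (K * t) * (1 + INR n)) with (eps / D * D) in Hw by (unfold D; ring).
  replace (eps / D * D) with eps in Hw by (field; lra).
  lra.
Qed.

End LatticeComparison.

Section Reaction.

Variables (s0 tau eta : R).
Hypotheses (Hs0 : 0 < s0) (Htau : 0 < tau) (Heta : 0 < eta).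

Let f := freact s0 tau eta.

Lemma freact_0 : f 0 = 0.
Proof. unfold f, freact. rewrite Rmult_0_r, exp_0. ring. Qed.

Lemma freact_lipschitz (B x y : R) : 0 <= B -> - B <= y -> y < x ->
  f x - f y <= s0 * tau * exp (tau * B) * (x - y).
Proof.
  intros HB Hy Hxy. unfold f, freact.
  assert (H1 : exp (- tau * y) * (1 - tau * (x - y)) <= exp (- tau * x)).
  { replace (- tau * x) with (- tau * y + - tau * (x - y)) by ring. rewrite exp_plus.
    apply Rmult_le_compat_l; [left; apply exp_pos|].
    pose proof (exp_ineq1_le (- tau * (x - y))). lra. }
  assert (H2 : exp (- tau * y) <= exp (tau * B)) by (apply exp_le_mono; nra).
  assert (0 <= tau * (x - y)) by nra.
  assert (exp (- tau * y) * (tau * (x - y)) <= exp (tau * B) * (tau * (x - y)))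
    by (apply Rmult_le_compat_r; lra).
  nra.
Qed.

Lemma freact_le_linear (v : R) : 0 <= v -> f v <= (s0 * tau - eta) * v.
Proof. intros. unfold f, freact. pose proof (exp_ineq1_le (- tau * v)). nra. Qed.

Lemma freact_ge_opp (v : R) : 0 <= v -> - eta * v <= f v.
Proof.
  intros Hv. unfold f, freact.
  assert (exp (- tau * v) <= 1) by (rewrite <- exp_0; apply exp_le_mono; nra).
  nra.
Qed.

Lemma freact_ge_quadratic (v : R) : 0 <= v ->
  (s0 * tau - eta) * v - s0 * (tau * tau) * (v * v) <= f v.
Proof.
  intros Hv. unfold f, freact.
  pose proof (exp_opp_le_quadratic (tau * v) ltac:(nra)).
  replace (- tau * v) with (- (tau * v)) by ring. nra.
Qed.

(* Convexity of [exp] between [0], [- tau v / 2] and [- tau v]. *)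
Lemma freact_concavity_gap (th v dl : R) : 0 <= th <= 1 -> 0 <= dl <= v ->
  s0 * Rmin th (1 - th) * ((1 - exp (- tau * dl / 2)) * (1 - exp (- tau * dl / 2)))
  <= f (th * v) - th * f v.
Proof.
  intros Hth Hdl. unfold f, freact.
  set (q := exp (- tau * v / 2)).
  assert (Hq2 : exp (- tau * v) = q * q) by (unfold q; rewrite <- exp_plus; f_equal; field).
  assert (Hq0 : 0 < q) by apply exp_pos.
  assert (Hqd : q <= exp (- tau * dl / 2)) by (apply exp_le_mono; unfold Rdiv; nra).
  assert (Hd1 : exp (- tau * dl / 2) <= 1) by (rewrite <- exp_0; apply exp_le_mono; unfold Rdiv; nra).
  assert (Hm : (1 - exp (- tau * dl / 2)) * (1 - exp (- tau * dl / 2)) <= (1 - q) * (1 - q)) by nra.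
  assert (Hconv : Rmin th (1 - th) * ((1 - q) * (1 - q))
                  <= (1 - th) + th * exp (- tau * v) - exp (- tau * (th * v))).
  { rewrite Hq2. destruct (Rle_or_lt th (1 / 2)) as [Hle|Hgt].
    - rewrite Rmin_left by lra.
      pose proof (exp_convex (2 * th) (- tau * v / 2) 0 ltac:(lra)) as He.
      replace (2 * th * (- tau * v / 2) + (1 - 2 * th) * 0) with (- tau * (th * v)) in He by field.
      rewrite exp_0 in He. fold q in He. nra.
    - rewrite Rmin_right by lra.
      pose proof (exp_convex (2 * th - 1) (- tau * v) (- tau * v / 2) ltac:(lra)) as He.
      replace ((2 * th - 1) * (- tau * v) + (1 - (2 * th - 1)) * (- tau * v / 2))
        with (- tau * (th * v)) in He by field.
      fold q in He. rewrite Hq2 in He. nra. }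
  assert (0 <= Rmin th (1 - th)) by (apply Rmin_glb; lra).
  assert (Rmin th (1 - th) * ((1 - exp (- tau * dl / 2)) * (1 - exp (- tau * dl / 2)))
          <= Rmin th (1 - th) * ((1 - q) * (1 - q))) by (apply Rmult_le_compat_l; assumption).
  nra.
Qed.

Lemma freact_concavity_gap_uniform (th0 ep dl M th v : R) : 0 < M -> 0 <= dl ->
  0 <= th0 -> 0 <= ep -> th0 <= th <= 1 - ep -> dl <= v <= M ->
  s0 * Rmin th0 ep * ((1 - exp (- tau * dl / 2)) * (1 - exp (- tau * dl / 2))) / M * v
  <= f (th * v) - th * f v.
Proof.
  intros HM Hdl Hth0 Hep Hth Hv.
  set (q := (1 - exp (- tau * dl / 2)) * (1 - exp (- tau * dl / 2))).
  assert (Hq : 0 <= q) by apply Rle_0_sqr.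
  eapply Rle_trans; [|apply (freact_concavity_gap th v dl); lra]. fold q.
  assert (Hmin : Rmin th0 ep <= Rmin th (1 - th)).
  { apply Rmin_glb; [eapply Rle_trans; [apply Rmin_l|lra]|eapply Rle_trans; [apply Rmin_r|lra]]. }
  assert (0 <= Rmin th0 ep) by (apply Rmin_glb; assumption).
  assert (Hv_M : s0 * Rmin th0 ep * q / M * v <= s0 * Rmin th0 ep * q / M * M).
  { apply Rmult_le_compat_l; [|lra]. apply Rdiv_le_0_compat; [|lra]. apply Rmult_le_pos; nra. }
  replace (s0 * Rmin th0 ep * q / M * M) with (s0 * Rmin th0 ep * q) in Hv_M by (field; lra).
  assert (s0 * Rmin th0 ep * q <= s0 * Rmin th (1 - th) * q).
  { apply Rmult_le_compat_r; [exact Hq|]. apply Rmult_le_compat_l; lra. }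
  lra.
Qed.

End Reaction.

Lemma eta_repro_sub1 (s0 tau eta : R) : 0 < eta -> eta * (repro s0 tau eta - 1) = s0 * tau - eta.
Proof. intros. unfold repro. field. lra. Qed.

Section Speed.

Variables (k : nat) (s0 tau eta lam : R).
Hypotheses (Hk : (2 <= k)%nat) (Hlam : 0 < lam) (Hlam_c : lam < lambda_c k s0 tau eta).

Lemma speed_fun_pos (g : R) : 0 < g -> 0 < speed_fun k s0 tau eta lam g.
Proof.
  intros Hg. unfold speed_fun. apply Rdiv_lt_0_compat; [|exact Hg].
  unfold lambda_c in Hlam_c.
  assert (Hk1 : 1 < sqrt (INR k)).
  { rewrite <- sqrt_1. apply sqrt_lt_1; [lra| |]; apply (le_INR 2) in Hk; simpl in Hk; lra. }
  assert (Hs : sqrt (INR k) * sqrt (INR k) = INR k) by (apply sqrt_sqrt, pos_INR).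
  assert (Hden : 0 < INR k + 1 - 2 * sqrt (INR k)) by nra.
  apply Rlt_div_r in Hlam_c; [|lra].
  pose proof (exp_add_mul_exp_opp_ge k g).
  nra.
Qed.

Let speeds := fun y => exists g, 0 < g /\ y = speed_fun k s0 tau eta lam g.

Lemma c_star_glb : is_glb_Rbar speeds (c_star k s0 tau eta lam).
Proof.
  assert (Hlb0 : is_lb_Rbar speeds 0).
  { intros y [g [Hg ->]]. simpl. left. apply speed_fun_pos, Hg. }
  pose proof (Glb_Rbar_correct speeds) as [Hlb Hgreatest].
  unfold c_star. fold speeds.
  destruct (Glb_Rbar speeds) as [r| |] eqn:Eg; simpl.
  - split; assumption.
  - exfalso. refine (Hlb (speed_fun k s0 tau eta lam 1) _). exists 1. split; [lra|reflexivity].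
  - exfalso. exact (Hgreatest 0 Hlb0).
Qed.

Lemma c_star_le_speed_fun (g : R) : 0 < g -> c_star k s0 tau eta lam <= speed_fun k s0 tau eta lam g.
Proof. intros Hg. apply (proj1 c_star_glb). exists g. split; [exact Hg|reflexivity]. Qed.

Lemma c_star_nonneg : 0 <= c_star k s0 tau eta lam.
Proof.
  apply (proj2 c_star_glb 0). intros y [g [Hg ->]]. simpl. left. apply speed_fun_pos, Hg.
Qed.

Lemma c_star_approx (c : R) : c_star k s0 tau eta lam < c ->
  exists g, 0 < g /\ speed_fun k s0 tau eta lam g < c.
Proof.
  intros Hc. apply NNPP. intros Hnone.
  assert (Hlb : is_lb_Rbar speeds c).
  { intros y [g [Hg ->]]. simpl. apply Rnot_lt_le. intros Hlt.
    apply Hnone. exists g. split; assumption. }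
  pose proof (proj2 c_star_glb c Hlb) as Hle. simpl in Hle. lra.
Qed.

End Speed.

(** * Travelling humps *)

Definition hump (al be y : R) : R := exp (- al * y) * sin (be * y).
Definition hump' (al be y : R) : R := exp (- al * y) * (- al * sin (be * y) + be * cos (be * y)).

Lemma hump_deriv (al be y : R) : derivable_pt_lim (hump al be) y (hump' al be y).
Proof. apply is_derive_Reals. unfold hump, hump'. auto_derive; [trivial|ring]. Qed.

Lemma hump_wave_identity (k : nat) (lam c1 al be y : R) :
  c1 * be = lam * sin be * (exp al - INR k * exp (- al)) ->
  - c1 * hump' al be y
  = (c1 * al - lam * (cos be * (exp al + INR k * exp (- al)) - (INR k + 1))) * hump al be y
    + lam * (hump al be (y - 1) - (INR k + 1) * hump al be y + INR k * hump al be (y + 1)).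
Proof.
  intros Hbe. unfold hump, hump'.
  replace (- al * (y - 1)) with (- al * y + al) by ring.
  replace (- al * (y + 1)) with (- al * y + - al) by ring.
  replace (be * (y - 1)) with (be * y - be) by ring.
  replace (be * (y + 1)) with (be * y + be) by ring.
  rewrite !exp_plus, sin_minus, sin_plus.
  set (ea := exp (- al * y)). set (sy := sin (be * y)). set (cy := cos (be * y)).
  assert (E : - c1 * (ea * (- al * sy + be * cy))
    - ((c1 * al - lam * (cos be * (exp al + INR k * exp (- al)) - (INR k + 1))) * (ea * sy)
       + lam * (ea * exp al * (sy * cos be - cy * sin be) - (INR k + 1) * (ea * sy)
                + INR k * (ea * exp (- al) * (sy * cos be + cy * sin be))))
    = ea * cy * (lam * sin be * (exp al - INR k * exp (- al)) - c1 * be)) by ring.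
  rewrite <- Hbe in E. lra.
Qed.

Section Dispersion.

Variables (k : nat) (lam c1 a : R).
Hypotheses (Hk : (1 <= k)%nat) (Hlam : 0 < lam) (Hc1 : 0 < c1).

Definition pos_root (y : R) : R := (y + sqrt (y * y + 4 * INR k)) / 2.

Lemma tree_root_eq (y : R) : pos_root y * pos_root y = y * pos_root y + INR k.
Proof.
  unfold pos_root. pose proof (pos_INR k).
  pose proof (sqrt_sqrt (y * y + 4 * INR k) ltac:(nra)). nra.
Qed.

Lemma tree_root_gt1 (y : R) : 0 < y -> 1 < pos_root y.
Proof.
  intros Hy. pose proof (tree_root_eq y). apply (le_INR 1) in Hk. simpl in Hk.
  assert (0 < pos_root y).
  { unfold pos_root. assert (0 < sqrt (y * y + 4 * INR k)) by (apply sqrt_lt_R0; nra). lra. }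
  nra.
Qed.

Lemma tree_root_sub (y : R) : 0 < y -> pos_root y - INR k / pos_root y = y.
Proof.
  intros Hy. pose proof (tree_root_eq y). pose proof (tree_root_gt1 y Hy).
  replace (INR k) with (pos_root y * pos_root y - y * pos_root y) by lra.
  field. lra.
Qed.

(* For [s = sin be / be] and [e^al = X s], the hump [e^(-al y) sin (be y)] satisfies the
   imaginary part of the dispersion relation at speed [c1]; [rate be] is then the growth rate
   it needs. As [be -> 0] this tends to a value below [a] exactly when [c1] is below the
   speed attached to [al = ln (X 1)]. *)
Let X (s : R) : R := pos_root (c1 / lam / s).
Let L (s : R) : R := c1 * ln (X s).
Let E (s : R) : R := X s + INR k / X s.
Let rate (be : R) : R := L (sin be / be) - lam * (cos be * E (sin be / be) - (INR k + 1)).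

Lemma X_gt1 (s : R) : 0 < s -> 1 < X s.
Proof.
  intros Hs. apply tree_root_gt1, Rdiv_lt_0_compat; [apply Rdiv_lt_0_compat|]; assumption.
Qed.

Lemma ex_derive_X (s : R) : 0 < s -> ex_derive X s.
Proof.
  intros Hs. unfold X, pos_root. auto_derive. repeat split; try lra.
  apply (le_INR 1) in Hk. simpl in Hk. nra.
Qed.

Lemma rate_lim : is_lim rate 0 (L 1 - lam * (E 1 - (INR k + 1))).
Proof.
  pose proof (X_gt1 1 ltac:(lra)).
  assert (HL : continuous L 1).
  { apply (@ex_derive_continuous R_AbsRing R_NormedModule). unfold L.
    auto_derive. repeat split; [apply ex_derive_X; lra|lra]. }
  assert (HE : continuous E 1).
  { apply (@ex_derive_continuous R_AbsRing R_NormedModule). unfold E.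
    auto_derive. repeat split; [apply ex_derive_X; lra|apply ex_derive_X; lra|lra]. }
  replace (E 1) with (cos 0 * E 1) by (rewrite cos_0; ring).
  apply is_lim_minus'; [exact (is_lim_comp_continuous _ _ 0 1 is_lim_sinc_0 HL)|].
  apply (is_lim_scal_l _ lam 0 (cos 0 * E 1 - (INR k + 1))).
  apply is_lim_minus'; [|apply is_lim_const].
  apply (is_lim_mult _ _ 0 (cos 0) (E 1)); [| |exact I].
  - apply is_lim_continuity, continuity_cos.
  - exact (is_lim_comp_continuous _ _ 0 1 is_lim_sinc_0 HE).
Qed.

Lemma hump_params :
  (forall g, 0 < g -> c1 < (a + lam * (exp g - (INR k + 1) + INR k * exp (- g))) / g) ->
  exists al be, 0 < al /\ 0 < be <= 1 /\
    c1 * be = lam * sin be * (exp al - INR k * exp (- al)) /\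
    c1 * al - lam * (cos be * (exp al + INR k * exp (- al)) - (INR k + 1)) < a.
Proof.
  intros Hspeed.
  assert (Hlim_lt : L 1 - lam * (E 1 - (INR k + 1)) < a).
  { pose proof (X_gt1 1 ltac:(lra)).
    assert (Hal0 : 0 < ln (X 1)) by (rewrite <- ln_1; apply ln_increasing; lra).
    specialize (Hspeed (ln (X 1)) Hal0).
    rewrite exp_Ropp, exp_ln in Hspeed by lra.
    apply Rlt_div_r in Hspeed; [|exact Hal0].
    unfold L, E. unfold Rdiv. lra. }
  destruct (is_lim_lt_right rate 0 _ a rate_lim Hlim_lt) as [d [Hd Hrate]].
  set (be := Rmin 1 (d / 2)).
  assert (Hbe : 0 < be <= 1) by (split; [apply Rmin_pos; lra|apply Rmin_l]).
  assert (Hbed : be <= d / 2) by apply Rmin_r.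
  assert (Hsin : 0 < sin be) by (apply sin_gt_0; [lra|pose proof PI2_1; lra]).
  assert (Hsinc : 0 < sin be / be) by (apply Rdiv_lt_0_compat; lra).
  pose proof (X_gt1 _ Hsinc) as HX.
  exists (ln (X (sin be / be))), be. rewrite exp_Ropp, exp_ln by lra.
  split; [|split; [exact Hbe|split]].
  - rewrite <- ln_1. apply ln_increasing; lra.
  - replace (INR k * / X (sin be / be)) with (INR k / X (sin be / be)) by reflexivity.
    unfold X. rewrite tree_root_sub by (repeat apply Rdiv_lt_0_compat; lra).
    field. split; lra.
  - specialize (Hrate be ltac:(lra)). unfold rate, L, E in Hrate. unfold Rdiv in Hrate. exact Hrate.
Qed.

End Dispersion.

Definition clamp (b y : R) : R := Rmax 0 (Rmin y b).

Lemma clamp_lipschitz (b x y : R) : Rabs (clamp b x - clamp b y) <= Rabs (x - y).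
Proof.
  pose proof (RRle_abs (x - y)). pose proof (RRle_abs (y - x)) as Hyx.
  rewrite Rabs_minus_sym in Hyx.
  unfold clamp, Rmax, Rmin. repeat destruct (Rle_dec _ _); apply Rabs_le; lra.
Qed.

Lemma clamp_id (b y : R) : 0 <= y <= b -> clamp b y = y.
Proof. intros. unfold clamp. rewrite Rmin_left by lra. apply Rmax_right; lra. Qed.

Lemma clamp_range (b y : R) : 0 <= b -> 0 <= clamp b y <= b.
Proof. intros. unfold clamp, Rmax, Rmin. repeat destruct (Rle_dec _ _); lra. Qed.

Lemma clamp_low (b y : R) : 0 <= b -> y <= 0 -> clamp b y = 0.
Proof. intros. unfold clamp, Rmax, Rmin. repeat destruct (Rle_dec _ _); lra. Qed.

Lemma clamp_high (b y : R) : 0 <= b -> b <= y -> clamp b y = b.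
Proof. intros. unfold clamp, Rmax, Rmin. repeat destruct (Rle_dec _ _); lra. Qed.

(* The first arch of [hump], extended by [0] outside [[0, PI / be]]. *)
Definition arch (al be y : R) : R := hump al be (clamp (PI / be) y).

Section Arch.

Variables (al be : R).
Hypotheses (Hal : 0 < al) (Hbe : 0 < be).

Let b := PI / be.

Lemma arch_period_pos : 0 < b.
Proof. apply Rdiv_lt_0_compat; [apply PI_RGT_0|exact Hbe]. Qed.

Lemma be_mul_period : be * b = PI.
Proof. unfold b. field. lra. Qed.

Lemma arch_continuity (y : R) : continuity_pt (arch al be) y.
Proof.
  intros eps Heps.
  assert (Hc : continuity_pt (hump al be) (clamp b y)).
  { apply derivable_continuous_pt. eexists. apply hump_deriv. }
  destruct (continuity_pt_eps _ _ Hc eps Heps) as [d [Hd Hz]].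
  exists d. split; [exact Hd|]. intros z [_ Hzy]. simpl in *. unfold R_dist in *.
  apply Hz. eapply Rle_lt_trans; [apply clamp_lipschitz|exact Hzy].
Qed.

Lemma arch_bounds (y : R) : 0 <= arch al be y <= 1.
Proof.
  pose proof arch_period_pos. pose proof be_mul_period.
  unfold arch, hump. fold b.
  destruct (clamp_range b y ltac:(lra)) as [H1 H2].
  set (z := clamp b y) in *.
  assert (Hs : 0 <= sin (be * z)) by (apply sin_ge_0; nra).
  assert (He : exp (- al * z) <= 1) by (rewrite <- exp_0; apply exp_le_mono; nra).
  pose proof (SIN_bound (be * z)). pose proof (exp_pos (- al * z)).
  split; [apply Rmult_le_pos; lra|nra].
Qed.

Lemma arch_eq_hump (y : R) : 0 <= y <= b -> arch al be y = hump al be y.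
Proof. intros Hy. unfold arch. fold b. rewrite clamp_id by exact Hy. reflexivity. Qed.

Lemma arch_zero_out (y : R) : y <= 0 \/ b <= y -> arch al be y = 0.
Proof.
  intros Hy. pose proof arch_period_pos. pose proof be_mul_period as HbeT.
  unfold arch, hump. fold b. destruct Hy as [Hy|Hy].
  - rewrite clamp_low by lra. rewrite !Rmult_0_r, sin_0. ring.
  - rewrite clamp_high by lra. rewrite HbeT, sin_PI. ring.
Qed.

Lemma hump_le_arch (z : R) : - b < z < 2 * b -> hump al be z <= arch al be z.
Proof.
  intros Hz. pose proof arch_period_pos. pose proof be_mul_period.
  pose proof (exp_pos (- al * z)).
  destruct (Rle_or_lt z 0) as [Hz0|Hz0]; [|destruct (Rle_or_lt b z) as [Hzb|Hzb]].
  - rewrite arch_zero_out by (left; exact Hz0). unfold hump.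
    assert (sin (be * z) <= 0).
    { rewrite <- (Ropp_involutive (be * z)), sin_neg.
      assert (0 <= sin (- (be * z))) by (apply sin_ge_0; nra). lra. }
    nra.
  - rewrite arch_zero_out by (right; exact Hzb). unfold hump.
    assert (sin (be * z) <= 0) by (apply sin_le_0; nra).
    nra.
  - rewrite arch_eq_hump by lra. lra.
Qed.

Lemma arch_shift_continuity (eps x c1 r : R) :
  continuity_pt (fun r => eps * arch al be (x - c1 * r)) r.
Proof.
  apply continuity_pt_mult; [apply continuity_pt_const; intros ? ?; reflexivity|].
  apply (continuity_pt_comp (fun r => x - c1 * r) (arch al be)); [|apply arch_continuity].
  apply derivable_continuous_pt. eexists. apply is_derive_Reals. auto_derive; [trivial|reflexivity].
Qed.

Lemma arch_shift_deriv (eps x c1 r : R) : 0 < c1 -> 0 < x - c1 * r < b ->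
  derivable_pt_lim (fun r => eps * arch al be (x - c1 * r)) r (eps * (- c1 * hump' al be (x - c1 * r))).
Proof.
  intros Hc1 Hr.
  apply (derivable_pt_lim_locally_ext (fun r => eps * hump al be (x - c1 * r)) _ r
           ((x - b) / c1) (x / c1)).
  - split; [apply Rlt_div_l|apply Rlt_div_r]; lra.
  - intros z [Hz1 Hz2]. apply Rlt_div_l in Hz1; [|lra]. apply Rlt_div_r in Hz2; [|lra].
    rewrite arch_eq_hump by lra. reflexivity.
  - replace (eps * (- c1 * hump' al be (x - c1 * r))) with (eps * (hump' al be (x - c1 * r) * (- c1)))
      by ring.
    apply derivable_pt_lim_scal.
    apply (derivable_pt_lim_comp (fun r => x - c1 * r) (hump al be)); [|apply hump_deriv].
    apply is_derive_Reals. auto_derive; [trivial|ring].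
Qed.

End Arch.

(** * The SIR system on the tree *)

Section Model.

Variables (k : nat) (s0 i0 tau eta lam : R).
Hypotheses (Hs0 : 0 < s0) (Hi0 : 0 < i0) (Htau : 0 < tau) (Heta : 0 < eta) (Hlam : 0 < lam).

Definition sir_rhs (x : nat -> R) (n : nat) : R :=
  freact s0 tau eta (x n) + (if (n =? 1)%nat then i0 else 0) + lam * tree_lap k x n.

Lemma sir_rhs_1 (x : nat -> R) :
  sir_rhs x 1 = freact s0 tau eta (x 1%nat) + i0 + lam * (INR k + 1) * (- x 1%nat + x 2%nat).
Proof. unfold sir_rhs, tree_lap. simpl. ring. Qed.

Lemma sir_rhs_ge2 (x : nat -> R) (n : nat) : (2 <= n)%nat ->
  sir_rhs x n = freact s0 tau eta (x n) + lam * (x (n - 1)%nat - (INR k + 1) * x n + INR k * x (S n)).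
Proof. intros Hn. destruct n as [|[|n]]; [lia|lia|]. unfold sir_rhs, tree_lap. simpl. ring. Qed.

Record is_solution (I : nat -> R -> R) : Prop := {
  sol_bounded : forall T, exists M, forall n t, (1 <= n)%nat -> 0 <= t <= T -> Rabs (I n t) <= M;
  sol_init : forall n, (1 <= n)%nat -> I n 0 = 0;
  sol_right_cont : forall n, (1 <= n)%nat -> forall eps, 0 < eps ->
    exists d, 0 < d /\ forall t, 0 <= t < d -> Rabs (I n t - I n 0) < eps;
  sol_deriv : forall n t, (1 <= n)%nat -> 0 < t ->
    derivable_pt_lim (I n) t (sir_rhs (fun m => I m t) n) }.

Record is_stationary (J : nat -> R) : Prop := {
  stat_pos : forall n, (1 <= n)%nat -> 0 < J n;
  stat_eq : forall n, (1 <= n)%nat -> sir_rhs J n = 0 }.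

Lemma sir_comparison (u v : nat -> R -> R) (T B Bd : R) : 0 <= T -> 0 <= B ->
  (forall n t, (1 <= n)%nat -> 0 <= t <= T -> u n t - v n t <= Bd) ->
  (forall n t, (1 <= n)%nat -> 0 <= t <= T -> - B <= v n t) ->
  (forall n, (1 <= n)%nat -> u n 0 <= v n 0) ->
  (forall n, (1 <= n)%nat -> cont_0T T (fun t => u n t - v n t)) ->
  (forall n t, (1 <= n)%nat -> 0 < t <= T -> v n t < u n t ->
     exists du dv, derivable_pt_lim (u n) t du /\ derivable_pt_lim (v n) t dv /\
       du <= sir_rhs (fun m => u m t) n /\ sir_rhs (fun m => v m t) n <= dv) ->
  forall n t, (1 <= n)%nat -> 0 <= t <= T -> u n t <= v n t.
Proof.
  intros HT HB Hbd Hlow Hinit Hcont Hder n t Hn Ht.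
  enough (u n t - v n t <= 0) by lra.
  apply (lattice_comparison k lam (s0 * tau * exp (tau * B)) T Bd (fun n t => u n t - v n t));
    try assumption; try lra.
  - left. apply Rmult_lt_0_compat; [nra|apply exp_pos].
  - intros m Hm. specialize (Hinit m Hm). lra.
  - intros m s Hm Hs Hpos.
    destruct (Hder m s Hm Hs ltac:(lra)) as [du [dv [Hdu [Hdv [Hsub Hsup]]]]].
    exists (du - dv). split; [apply derivable_pt_lim_minus; assumption|].
    rewrite tree_lap_minus.
    pose proof (freact_lipschitz s0 tau eta Hs0 Htau Heta B (u m s) (v m s) HB
                  (Hlow m s Hm ltac:(lra)) ltac:(lra)).
    unfold sir_rhs in Hsub, Hsup. lra.
Qed.

Lemma sir_rhs_exp_front_le (g c A t : R) (n : nat) : 0 < g -> 0 <= c -> 0 <= t ->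
  speed_fun k s0 tau eta lam g <= c -> i0 * exp g <= A * (lam * (exp g - exp (- g))) ->
  (1 <= n)%nat ->
  sir_rhs (fun m => A * exp (g * (c * t - INR m))) n <= g * c * (A * exp (g * (c * t - INR n))).
Proof.
  intros Hg Hc Ht Hspeed HA Hn.
  set (V := fun m : nat => A * exp (g * (c * t - INR m))).
  assert (Hem : exp g * exp (- g) = 1) by (rewrite <- exp_plus, Rplus_opp_r; apply exp_0).
  assert (Hlt : exp (- g) < exp g) by (apply exp_increasing; lra).
  assert (HA0 : 0 < A).
  { assert (0 < i0 * exp g) by (apply Rmult_lt_0_compat; [exact Hi0|apply exp_pos]).
    assert (0 < lam * (exp g - exp (- g))) by (apply Rmult_lt_0_compat; lra). nra. }
  assert (HVpos : forall m, 0 < V m) by (intros m; apply Rmult_lt_0_compat; [exact HA0|apply exp_pos]).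
  assert (HVS : forall m, V (S m) = V m * exp (- g)).
  { intros m. unfold V. rewrite S_INR, Rmult_assoc, <- exp_plus. do 2 f_equal. ring. }
  unfold speed_fun in Hspeed. rewrite eta_repro_sub1 in Hspeed by exact Heta.
  apply Rle_div_l in Hspeed; [|exact Hg].
  assert (Hlin : (s0 * tau - eta + lam * (exp g - (INR k + 1) + INR k * exp (- g))) * V n
                 <= g * c * V n) by (apply Rmult_le_compat_r; [left; apply HVpos|lra]).
  pose proof (freact_le_linear s0 tau eta Hs0 (V n) (Rlt_le _ _ (HVpos n))) as Hf.
  change (A * exp (g * (c * t - INR n))) with (V n).
  destruct (Nat.eq_dec n 1) as [->|Hn1].
  - rewrite sir_rhs_1, (HVS 1%nat).
    assert (HV1 : A * exp (- g) <= V 1%nat).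
    { apply Rmult_le_compat_l; [lra|]. apply exp_le_mono.
      assert (0 <= g * (c * t)) by (apply Rmult_le_pos; [lra|apply Rmult_le_pos; lra]).
      simpl INR. lra. }
    assert (Hsrc : i0 <= lam * (exp g - exp (- g)) * V 1%nat).
    { apply Rmult_le_compat_r with (r := exp (- g)) in HA; [|left; apply exp_pos].
      replace (i0 * exp g * exp (- g)) with i0 in HA by (rewrite Rmult_assoc, Hem; ring).
      assert (lam * (exp g - exp (- g)) * (A * exp (- g)) <= lam * (exp g - exp (- g)) * V 1%nat)
        by (apply Rmult_le_compat_l; [apply Rmult_le_pos; lra|exact HV1]).
      lra. }
    lra.
  - rewrite sir_rhs_ge2 by lia.
    assert (HVP : V (n - 1)%nat = V n * exp g).
    { unfold V. rewrite minus_INR by lia. simpl INR.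
      rewrite Rmult_assoc, <- exp_plus. do 2 f_equal. ring. }
    rewrite HVP, HVS. lra.
Qed.

Lemma sir_rhs_ge_arch (al be c1 eps x0 s : R) (m : nat) :
  0 < al -> 0 < be <= 1 -> 0 < eps ->
  c1 * be = lam * sin be * (exp al - INR k * exp (- al)) ->
  s0 * (tau * tau) * eps
    <= s0 * tau - eta - (c1 * al - lam * (cos be * (exp al + INR k * exp (- al)) - (INR k + 1))) ->
  (2 <= m)%nat -> 0 < INR m - x0 - c1 * s < PI / be ->
  eps * (- c1 * hump' al be (INR m - x0 - c1 * s))
  <= sir_rhs (fun j => eps * arch al be (INR j - x0 - c1 * s)) m.
Proof.
  intros Hal Hbe Heps Hwave Hmargin Hm Hy.
  set (y := INR m - x0 - c1 * s) in *.
  set (a' := c1 * al - lam * (cos be * (exp al + INR k * exp (- al)) - (INR k + 1))) in *.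
  assert (Hb1 : 1 < PI / be).
  { apply Rlt_div_r; [lra|]. pose proof PI2_1. lra. }
  rewrite sir_rhs_ge2 by exact Hm. cbv beta. fold y.
  replace (INR (m - 1) - x0 - c1 * s) with (y - 1)
    by (rewrite minus_INR by lia; simpl INR; unfold y; ring).
  replace (INR (S m) - x0 - c1 * s) with (y + 1) by (rewrite S_INR; unfold y; ring).
  rewrite (arch_eq_hump al be) by lra.
  rewrite (hump_wave_identity k lam c1 al be y Hwave). fold a'.
  assert (Hprev : hump al be (y - 1) <= arch al be (y - 1)) by (apply hump_le_arch; lra).
  assert (Hnext : hump al be (y + 1) <= arch al be (y + 1)) by (apply hump_le_arch; lra).
  pose proof (arch_bounds al be Hal ltac:(lra) y) as Hrange.
  rewrite (arch_eq_hump al be) in Hrange by lra.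
  set (u := eps * hump al be y).
  assert (Hu : 0 <= u <= eps) by (unfold u; split; nra).
  pose proof (freact_ge_quadratic s0 tau eta Hs0 Htau u (proj1 Hu)) as Hf.
  assert (Hquad : s0 * (tau * tau) * (u * u) <= (s0 * tau - eta - a') * u).
  { assert (s0 * (tau * tau) * u <= s0 * tau - eta - a').
    { eapply Rle_trans; [|exact Hmargin]. apply Rmult_le_compat_l; [|lra].
      apply Rmult_le_pos; [lra|nra]. }
    replace (s0 * (tau * tau) * (u * u)) with (s0 * (tau * tau) * u * u) by ring.
    apply Rmult_le_compat_r; lra. }
  pose proof (pos_INR k).
  assert (lam * (eps * hump al be (y - 1)) <= lam * (eps * arch al be (y - 1))).
  { apply Rmult_le_compat_l; [lra|]. apply Rmult_le_compat_l; lra. }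
  assert (lam * INR k * (eps * hump al be (y + 1)) <= lam * INR k * (eps * arch al be (y + 1))).
  { apply Rmult_le_compat_l; [nra|]. apply Rmult_le_compat_l; lra. }
  unfold u in *. nra.
Qed.

Lemma sir_rhs_ge_lift (J : nat -> R) (th C kap : R) (m : nat) : is_stationary J -> (1 <= m)%nat ->
  0 <= th <= 1 -> 0 < C -> C * exp (INR m) <= th * J m ->
  kap * J m <= freact s0 tau eta (th * J m) - th * freact s0 tau eta (J m) ->
  kap * J m - (s0 * tau + 3 * lam * (INR k + 1)) * (C * exp (INR m))
  <= sir_rhs (fun j => th * J j - C * exp (INR j)) m.
Proof.
  intros HJ Hm Hth HC Hz Hgap.
  set (z := C * exp (INR m)) in *.
  assert (Hz0 : 0 < z) by (apply Rmult_lt_0_compat; [exact HC|apply exp_pos]).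
  assert (Hlip : freact s0 tau eta (th * J m) - freact s0 tau eta (th * J m - z) <= s0 * tau * z).
  { pose proof (freact_lipschitz s0 tau eta Hs0 Htau Heta 0 (th * J m) (th * J m - z)
                  ltac:(lra) ltac:(lra) ltac:(lra)) as H.
    rewrite Rmult_0_r, exp_0, Rmult_1_r in H. replace (th * J m - (th * J m - z)) with z in H by ring.
    exact H. }
  assert (Hlap : tree_lap k (fun j => C * exp (INR j)) m <= 3 * (INR k + 1) * z).
  { rewrite tree_lap_scal. unfold z.
    replace (3 * (INR k + 1) * (C * exp (INR m))) with (C * (3 * (INR k + 1) * exp (INR m))) by ring.
    apply Rmult_le_compat_l; [lra|apply tree_lap_exp_le, Hm]. }
  assert (Hsrc : 0 <= (1 - th) * (if (m =? 1)%nat then i0 else 0))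
    by (apply Rmult_le_pos; [lra|destruct (m =? 1)%nat; lra]).
  pose proof (stat_eq J HJ m Hm) as Heq. unfold sir_rhs in Heq |- *.
  rewrite (tree_lap_minus k (fun j => th * J j)), (tree_lap_scal k th J).
  assert (lam * tree_lap k (fun j => C * exp (INR j)) m <= lam * (3 * (INR k + 1) * z))
    by (apply Rmult_le_compat_l; lra).
  assert (HlapJ : lam * tree_lap k J m = - freact s0 tau eta (J m) - (if (m =? 1)%nat then i0 else 0))
    by lra.
  assert (Hth_lap : lam * (th * tree_lap k J m)
                    = th * (- freact s0 tau eta (J m) - (if (m =? 1)%nat then i0 else 0)))
    by (rewrite <- HlapJ; ring).
  fold z. lra.
Qed.

Section Solution.

Variable I : nat -> R -> R.
Hypothesis HI : is_solution I.

Lemma sol_bound (T : R) : 0 <= T ->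
  exists M, 0 <= M /\ forall n t, (1 <= n)%nat -> 0 <= t <= T -> - M <= I n t <= M.
Proof.
  intros HT. destruct (sol_bounded I HI T) as [M HM].
  exists M. split.
  - eapply Rle_trans; [apply Rabs_pos|]. apply (HM 1%nat 0); [lia|lra].
  - intros n t Hn Ht. apply Rabs_le_between, HM; assumption.
Qed.

Lemma sol_cont (T : R) (n : nat) : (1 <= n)%nat -> cont_0T T (I n).
Proof.
  intros Hn. apply cont_0T_of_right_cont; [apply (sol_right_cont I HI n Hn)|].
  intros t Ht. apply derivable_continuous_pt. eexists. apply (sol_deriv I HI); assumption.
Qed.

Lemma sol_shift_cont (T h : R) (n : nat) : (1 <= n)%nat -> 0 <= h ->
  cont_0T T (fun s => I n (s + h)).
Proof. intros Hn Hh. apply cont_0T_shift; [exact Hh|apply sol_cont, Hn]. Qed.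

Lemma sol_shift_deriv (h s : R) (n : nat) : (1 <= n)%nat -> 0 < s + h ->
  derivable_pt_lim (fun s => I n (s + h)) s (sir_rhs (fun m => I m (s + h)) n).
Proof. intros Hn Hs. apply derivable_pt_lim_shift, (sol_deriv I HI); assumption. Qed.

Lemma sol_nonneg (n : nat) (t : R) : (1 <= n)%nat -> 0 <= t -> 0 <= I n t.
Proof.
  intros Hn Ht. destruct (sol_bound t Ht) as [M [HM0 HM]].
  apply (sir_comparison (fun _ _ => 0) I t M M); try assumption.
  - intros m s Hm Hs. specialize (HM m s Hm Hs). lra.
  - intros m s Hm Hs. apply HM; assumption.
  - intros m Hm. rewrite (sol_init I HI m Hm). lra.
  - intros m Hm. apply cont_0T_minus; [apply cont_0T_const|apply sol_cont, Hm].
  - intros m s Hm Hs _. exists 0, (sir_rhs (fun j => I j s) m).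
    split; [apply derivable_pt_lim_const|]. split; [apply (sol_deriv I HI); [exact Hm|lra]|].
    split; [|lra]. unfold sir_rhs, tree_lap. rewrite (freact_0 s0 tau eta).
    destruct (m =? 1)%nat; destruct m as [|[|m]]; lra.
  - lra.
Qed.

Lemma sol_le_stationary (J : nat -> R) : is_stationary J ->
  forall n t, (1 <= n)%nat -> 0 <= t -> I n t <= J n.
Proof.
  intros HJ n t Hn Ht. destruct (sol_bound t Ht) as [M [HM0 HM]].
  apply (sir_comparison I (fun m _ => J m) t 0 M); try assumption; try lra.
  - intros m s Hm Hs. pose proof (HM m s Hm Hs). pose proof (stat_pos J HJ m Hm). lra.
  - intros m s Hm Hs. pose proof (stat_pos J HJ m Hm). lra.
  - intros m Hm. rewrite (sol_init I HI m Hm). left. apply (stat_pos J HJ m Hm).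
  - intros m Hm. apply cont_0T_minus; [apply sol_cont, Hm|apply cont_0T_const].
  - intros m s Hm Hs _. exists (sir_rhs (fun j => I j s) m), 0.
    split; [apply (sol_deriv I HI); [exact Hm|lra]|]. split; [apply derivable_pt_lim_const|].
    split; [lra|]. right. exact (stat_eq J HJ m Hm).
Qed.

Lemma sol_nondecreasing (n : nat) (t h : R) : (1 <= n)%nat -> 0 <= t -> 0 <= h ->
  I n t <= I n (t + h).
Proof.
  intros Hn Ht Hh. destruct (Rle_lt_or_eq_dec 0 h Hh) as [Hhpos| <-]; [|rewrite Rplus_0_r; lra].
  destruct (sol_bound (t + h) ltac:(lra)) as [M [HM0 HM]].
  apply (sir_comparison I (fun m s => I m (s + h)) t M (M + M)); try assumption.
  - intros m s Hm Hs. pose proof (HM m s Hm ltac:(lra)). pose proof (HM m (s + h) Hm ltac:(lra)). lra.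
  - intros m s Hm Hs. apply HM; [exact Hm|lra].
  - intros m Hm. rewrite (sol_init I HI m Hm), Rplus_0_l. apply sol_nonneg; assumption.
  - intros m Hm. apply cont_0T_minus; [apply sol_cont, Hm|apply sol_shift_cont; assumption].
  - intros m s Hm Hs _. exists (sir_rhs (fun j => I j s) m), (sir_rhs (fun j => I j (s + h)) m).
    split; [apply (sol_deriv I HI); [exact Hm|lra]|].
    split; [apply sol_shift_deriv; [exact Hm|lra]|]. lra.
  - lra.
Qed.

Lemma sol_pos (n : nat) (t : R) : (1 <= n)%nat -> 0 < t -> 0 < I n t.
Proof.
  pose proof (pos_INR k).
  set (q := eta + lam * (INR k + 1)).
  assert (Hstep : forall n, (1 <= n)%nat ->
            (forall t, 0 < t -> 0 < sir_rhs (fun m => I m t) n + q * I n t) ->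
            forall t, 0 < t -> 0 < I n t).
  { intros m Hm Hrhs. apply (pos_of_deriv_bound (I m) (fun t => sir_rhs (fun j => I j t) m) q).
    - intros s Hs. apply (sol_deriv I HI m s Hm Hs).
    - intros s Hs. apply sol_nonneg; [exact Hm|lra].
    - exact Hrhs. }
  assert (Hind : forall m t, 0 < t -> 0 < I (S m) t).
  { intros m. induction m as [|m IH]; apply Hstep; try lia; intros s Hs; unfold sir_rhs, tree_lap, q.
    - pose proof (sol_nonneg 1 s ltac:(lia) ltac:(lra)).
      pose proof (sol_nonneg 2 s ltac:(lia) ltac:(lra)).
      pose proof (freact_ge_opp s0 tau eta Hs0 Htau (I 1%nat s) ltac:(assumption)).
      assert (0 <= lam * ((INR k + 1) * I 2%nat s)) by (apply Rmult_le_pos; nra).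
      simpl Nat.eqb. cbv iota. lra.
    - pose proof (sol_nonneg (S (S m)) s ltac:(lia) ltac:(lra)).
      pose proof (sol_nonneg (S (S (S m))) s ltac:(lia) ltac:(lra)).
      pose proof (IH s Hs).
      pose proof (freact_ge_opp s0 tau eta Hs0 Htau (I (S (S m)) s) ltac:(assumption)).
      assert (0 <= lam * (INR k * I (S (S (S m))) s)) by (apply Rmult_le_pos; nra).
      assert (0 < lam * I (S m) s) by (apply Rmult_lt_0_compat; assumption).
      replace (S (S m) - 1)%nat with (S m) by lia. simpl Nat.eqb. cbv iota. lra. }
  intros Hn Ht. destruct n as [|n]; [lia|]. apply Hind, Ht.
Qed.

Lemma sol_le_exp_front (g c : R) : 0 < g -> 0 <= c -> speed_fun k s0 tau eta lam g <= c ->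
  exists A, 0 < A /\ forall n t, (1 <= n)%nat -> 0 <= t -> I n t <= A * exp (g * (c * t - INR n)).
Proof.
  intros Hg Hc Hspeed.
  set (D := lam * (exp g - exp (- g))).
  assert (HD : 0 < D).
  { apply Rmult_lt_0_compat; [exact Hlam|]. pose proof (exp_increasing (- g) g ltac:(lra)). lra. }
  set (A := i0 * exp g / D).
  assert (HA0 : 0 < A).
  { apply Rdiv_lt_0_compat; [apply Rmult_lt_0_compat; [exact Hi0|apply exp_pos]|exact HD]. }
  assert (HA : i0 * exp g <= A * D) by (right; unfold A; field; lra).
  set (V := fun (m : nat) s => A * exp (g * (c * s - INR m))).
  assert (HVpos : forall m s, 0 < V m s)
    by (intros; apply Rmult_lt_0_compat; [exact HA0|apply exp_pos]).
  assert (HVder : forall m s, derivable_pt_lim (V m) s (g * c * V m s)).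
  { intros m s. apply is_derive_Reals. unfold V, Rminus; cbv beta. auto_derive; [trivial|ring]. }
  exists A. split; [exact HA0|]. intros n t Hn Ht.
  destruct (sol_bound t Ht) as [M [HM0 HM]].
  apply (sir_comparison I V t 0 M); try assumption; try lra.
  - intros m s Hm Hs. pose proof (HM m s Hm Hs). pose proof (HVpos m s). lra.
  - intros m s Hm Hs. pose proof (HVpos m s). lra.
  - intros m Hm. rewrite (sol_init I HI m Hm). left. apply HVpos.
  - intros m Hm. apply cont_0T_minus; [apply sol_cont, Hm|].
    apply cont_0T_of_continuity. intros s. apply derivable_continuous_pt. eexists. apply HVder.
  - intros m s Hm Hs _. exists (sir_rhs (fun j => I j s) m), (g * c * V m s).
    split; [apply (sol_deriv I HI); [exact Hm|lra]|]. split; [apply HVder|].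
    split; [lra|]. apply sir_rhs_exp_front_le; try assumption; lra.
Qed.

Lemma sol_vanishes_ahead (c : R) : (2 <= k)%nat -> lam < lambda_c k s0 tau eta ->
  c_star k s0 tau eta lam < c ->
  forall eps, 0 < eps -> exists T, forall t, T <= t ->
    forall n, (1 <= n)%nat -> c * t <= INR n -> Rabs (I n t) <= eps.
Proof.
  intros Hk Hlam_c Hc eps Heps.
  pose proof (c_star_nonneg k s0 tau eta lam Hk Hlam Hlam_c) as Hc0.
  set (c' := (c + c_star k s0 tau eta lam) / 2).
  destruct (c_star_approx k s0 tau eta lam Hk Hlam Hlam_c c' ltac:(unfold c'; lra))
    as [g [Hg Hspeed]].
  destruct (sol_le_exp_front g c' Hg ltac:(unfold c'; lra) ltac:(lra)) as [A [HA HIA]].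
  set (q := g * (c' - c)).
  assert (Hq : q < 0) by (unfold q, c'; nra).
  exists (Rmax 0 (ln (eps / A) / q)). intros t Ht n Hn Hct.
  pose proof (Rmax_l 0 (ln (eps / A) / q)) as Ht0.
  pose proof (Rmax_r 0 (ln (eps / A) / q)) as HtT.
  rewrite Rabs_right by (apply Rle_ge, sol_nonneg; [exact Hn|lra]).
  eapply Rle_trans; [apply HIA; [exact Hn|lra]|].
  apply mul_exp_le_of_le_ln; [exact HA|exact Heps|].
  assert (Hgn : g * (c * t) <= g * INR n) by (apply Rmult_le_compat_l; lra).
  assert (Hqt : q * (ln (eps / A) / q) >= q * t) by (apply Rmult_le_ge_compat_neg_l; lra).
  replace (q * (ln (eps / A) / q)) with (ln (eps / A)) in Hqt by (field; lra).
  unfold q in Hqt. lra.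
Qed.

Lemma sol_ge_arch_profile (al be c1 eps : R) : 0 < al -> 0 < be <= 1 -> 0 < c1 -> 0 < eps ->
  c1 * be = lam * sin be * (exp al - INR k * exp (- al)) ->
  s0 * (tau * tau) * eps
    <= s0 * tau - eta - (c1 * al - lam * (cos be * (exp al + INR k * exp (- al)) - (INR k + 1))) ->
  (forall n, (1 <= n)%nat -> INR n - (1 + c1) < PI / be -> eps <= I n 1) ->
  forall n s, (1 <= n)%nat -> 0 <= s -> eps * arch al be (INR n - (1 + c1) - c1 * s) <= I n (s + 1).
Proof.
  intros Hal Hbe Hc1 Heps Hwave Hmargin Hstart n s Hn Hs.
  set (x0 := 1 + c1) in *.
  set (u := fun (m : nat) r => eps * arch al be (INR m - x0 - c1 * r)).
  assert (Hu : forall m r, 0 <= u m r <= eps).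
  { intros m r. pose proof (arch_bounds al be Hal ltac:(lra) (INR m - x0 - c1 * r)). unfold u. nra. }
  assert (Hu_out : forall m r, INR m - x0 - c1 * r <= 0 \/ PI / be <= INR m - x0 - c1 * r -> u m r = 0).
  { intros m r Hout. unfold u. rewrite arch_zero_out; [ring|lra|exact Hout]. }
  apply (sir_comparison u (fun m r => I m (r + 1)) s 0 eps); try assumption; try lra.
  - intros m r Hm Hr. pose proof (Hu m r). pose proof (sol_nonneg m (r + 1) Hm ltac:(lra)). lra.
  - intros m r Hm Hr. pose proof (sol_nonneg m (r + 1) Hm ltac:(lra)). lra.
  - intros m Hm. rewrite Rplus_0_l.
    destruct (Rle_or_lt (PI / be) (INR m - x0 - c1 * 0)) as [Hout|Hin].
    + rewrite Hu_out by (right; exact Hout). apply sol_nonneg; [exact Hm|lra].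
    + rewrite Rmult_0_r, Rminus_0_r in Hin. pose proof (Hstart m Hm Hin). pose proof (Hu m 0). lra.
  - intros m Hm. apply cont_0T_minus; [|apply sol_shift_cont; [exact Hm|lra]].
    apply cont_0T_of_continuity. intros r. apply arch_shift_continuity; lra.
  - intros m r Hm Hr Hlt.
    pose proof (sol_nonneg m (r + 1) Hm ltac:(lra)).
    assert (Hy : 0 < INR m - x0 - c1 * r < PI / be).
    { destruct (Rle_or_lt (INR m - x0 - c1 * r) 0) as [Hy0|Hy0];
        [rewrite Hu_out in Hlt by (left; exact Hy0); lra|].
      destruct (Rle_or_lt (PI / be) (INR m - x0 - c1 * r)) as [Hyb|Hyb];
        [rewrite Hu_out in Hlt by (right; exact Hyb); lra|].
      lra. }
    assert (Hm2 : (2 <= m)%nat).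
    { destruct (Nat.eq_dec m 1) as [->|]; [|lia]. unfold x0 in Hy. simpl in Hy. nra. }
    exists (eps * (- c1 * hump' al be (INR m - x0 - c1 * r))), (sir_rhs (fun j => I j (r + 1)) m).
    split; [apply arch_shift_deriv; lra|].
    split; [apply sol_shift_deriv; [exact Hm|lra]|].
    split; [apply sir_rhs_ge_arch; auto|lra].
Qed.

Lemma sol_ge_travelling_arch (c1 : R) : (1 <= k)%nat -> 0 < c1 -> 0 < s0 * tau - eta ->
  (forall g, 0 < g -> c1 < speed_fun k s0 tau eta lam g) ->
  exists al be eps, 0 < al /\ 0 < be <= 1 /\ 0 < eps /\
    forall n s, (1 <= n)%nat -> 0 <= s -> eps * arch al be (INR n - (1 + c1) - c1 * s) <= I n (s + 1).
Proof.
  intros Hk Hc1 Ha Hspeed.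
  destruct (hump_params k lam c1 (s0 * tau - eta) Hk Hlam Hc1) as [al [be [Hal [Hbe [Hwave Hrate]]]]].
  { intros g Hg. specialize (Hspeed g Hg). unfold speed_fun in Hspeed.
    rewrite eta_repro_sub1 in Hspeed by exact Heta. exact Hspeed. }
  set (a' := c1 * al - lam * (cos be * (exp al + INR k * exp (- al)) - (INR k + 1))) in *.
  destruct (INR_archimed 1 (1 + c1 + PI / be) ltac:(lra)) as [N HN]. rewrite Rmult_1_r in HN.
  destruct (finite_min_pos (fun n => I n 1) N) as [d0 [Hd0 Hd0le]].
  { intros n Hn. apply sol_pos; [lia|lra]. }
  assert (Hquad : 0 < s0 * (tau * tau)) by (apply Rmult_lt_0_compat; nra).
  set (eps := Rmin d0 ((s0 * tau - eta - a') / (s0 * (tau * tau)))).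
  assert (Heps : 0 < eps) by (apply Rmin_pos; [exact Hd0|apply Rdiv_lt_0_compat; lra]).
  assert (Hmargin : s0 * (tau * tau) * eps <= s0 * tau - eta - a').
  { assert (Heps_r : eps <= (s0 * tau - eta - a') / (s0 * (tau * tau))) by apply Rmin_r.
    apply Rle_div_r in Heps_r; lra. }
  exists al, be, eps. split; [exact Hal|]. split; [exact Hbe|]. split; [exact Heps|].
  apply sol_ge_arch_profile; try assumption.
  intros n Hn Hnb. assert (HnN : (n <= N)%nat) by (apply INR_le; lra).
  assert (eps <= d0) by apply Rmin_l. pose proof (Hd0le n ltac:(lia)). lra.
Qed.

Lemma sol_ge_behind_front (c1 : R) : (1 <= k)%nat -> 0 < c1 -> 0 < s0 * tau - eta ->
  (forall g, 0 < g -> c1 < speed_fun k s0 tau eta lam g) ->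
  exists dl, 0 < dl /\ forall t n, 1 <= t -> (1 <= n)%nat -> INR n <= c1 * t -> dl <= I n t.
Proof.
  intros Hk Hc1 Ha Hspeed.
  destruct (sol_ge_travelling_arch c1 Hk Hc1 Ha Hspeed) as [al [be [eps [Hal [Hbe [Heps Harch]]]]]].
  set (x0 := 1 + c1) in *.
  set (ys := PI / be / 2).
  pose proof PI_RGT_0.
  assert (Hb : 0 < PI / be) by (apply Rdiv_lt_0_compat; lra).
  assert (Hys : 0 < ys) by (unfold ys; lra).
  assert (Harch_ys : arch al be ys = exp (- al * ys)).
  { rewrite arch_eq_hump by (unfold ys; lra). unfold hump.
    replace (be * ys) with (PI / 2) by (unfold ys; field; lra). rewrite sin_PI2. ring. }
  destruct (INR_archimed 1 (x0 + ys) ltac:(lra)) as [N HN]. rewrite Rmult_1_r in HN.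
  destruct (finite_min_pos (fun n => I n 1) N) as [d1 [Hd1 Hd1le]].
  { intros n Hn. apply sol_pos; [lia|lra]. }
  set (dl := Rmin (eps * exp (- al * ys)) d1).
  exists dl. split; [apply Rmin_pos; [apply Rmult_lt_0_compat; [exact Heps|apply exp_pos]|exact Hd1]|].
  intros t n Ht Hn Hnt.
  destruct (Rle_or_lt (x0 + ys) (INR n)) as [Hfar|Hnear].
  - set (sn := (INR n - x0 - ys) / c1).
    assert (Hsn : 0 <= sn) by (apply Rdiv_le_0_compat; lra).
    assert (Hsnt : sn + 1 <= t).
    { assert (sn <= t - 1); [|lra]. apply Rle_div_l; [exact Hc1|]. unfold x0 in *. lra. }
    specialize (Harch n sn Hn Hsn).
    replace (INR n - x0 - c1 * sn) with ys in Harch by (unfold sn; field; lra).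
    rewrite Harch_ys in Harch.
    pose proof (sol_nondecreasing n (sn + 1) (t - (sn + 1)) Hn ltac:(lra) ltac:(lra)) as Hmono.
    replace (sn + 1 + (t - (sn + 1))) with t in Hmono by ring.
    assert (dl <= eps * exp (- al * ys)) by apply Rmin_l. lra.
  - assert (HnN : (n <= N)%nat) by (apply INR_le; lra).
    pose proof (Hd1le n ltac:(lia)).
    pose proof (sol_nondecreasing n 1 (t - 1) Hn ltac:(lra) ltac:(lra)) as Hmono.
    replace (1 + (t - 1)) with t in Hmono by ring.
    assert (dl <= d1) by apply Rmin_r. lra.
Qed.

(* [th] grows at rate [kap], paid for by the concavity gap of [f]; the correction
   [dl e^(K s + n - c1 t0)] absorbs the Lipschitz loss and the coupling, and is at least [dl]
   ahead of [c1 t0], where the profile starts below [0]. *)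
Lemma sol_ge_lift_profile (J : nat -> R) (M c1 dl th0 kap Tth t0 : R) :
  is_stationary J -> (forall n, (1 <= n)%nat -> J n <= M) ->
  (forall t n, 1 <= t -> (1 <= n)%nat -> INR n <= c1 * t -> dl <= I n t) ->
  0 < dl -> 0 <= th0 -> th0 * M <= dl -> 0 <= kap -> 0 <= Tth -> th0 + kap * Tth <= 1 -> 1 <= t0 ->
  (forall th m, th0 <= th <= th0 + kap * Tth -> (1 <= m)%nat ->
     kap * J m <= freact s0 tau eta (th * J m) - th * freact s0 tau eta (J m)) ->
  forall n, (1 <= n)%nat ->
    (th0 + kap * Tth) * J n
    - dl * exp ((s0 * tau + 3 * lam * (INR k + 1)) * Tth) * exp (INR n - c1 * t0)
    <= I n (Tth + t0).
Proof.
  intros HJ HM Hbehind Hdl Hth0 Hth0M Hkap HTth Hth1 Ht0 Hgap n Hn.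
  set (K := s0 * tau + 3 * lam * (INR k + 1)).
  set (C := fun s => dl * exp (K * s) * exp (- (c1 * t0))).
  assert (HC : forall s, 0 < C s).
  { intros s. apply Rmult_lt_0_compat; [apply Rmult_lt_0_compat; [exact Hdl|]|]; apply exp_pos. }
  assert (HCexp : forall m s, C s * exp (INR m) = dl * exp (K * s) * exp (INR m - c1 * t0)).
  { intros m s. unfold C. replace (INR m - c1 * t0) with (- (c1 * t0) + INR m) by ring.
    rewrite exp_plus. ring. }
  set (u := fun (m : nat) s => (th0 + kap * s) * J m - C s * exp (INR m)).
  rewrite <- HCexp.
  apply (sir_comparison u (fun m s => I m (s + t0)) Tth 0 M); try assumption; try lra.
  - intros m s Hm Hs. unfold u.
    pose proof (sol_nonneg m (s + t0) Hm ltac:(lra)). pose proof (HM m Hm).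
    pose proof (stat_pos J HJ m Hm). pose proof (HC s). pose proof (exp_pos (INR m)).
    assert ((th0 + kap * s) * J m <= 1 * M) by (apply Rmult_le_compat; nra).
    nra.
  - intros m s Hm Hs. pose proof (sol_nonneg m (s + t0) Hm ltac:(lra)). lra.
  - intros m Hm. unfold u. rewrite Rmult_0_r, Rplus_0_r, Rplus_0_l, HCexp, Rmult_0_r, exp_0, Rmult_1_r.
    pose proof (HM m Hm). pose proof (stat_pos J HJ m Hm).
    assert (th0 * J m <= dl) by (eapply Rle_trans; [apply Rmult_le_compat_l; eassumption|exact Hth0M]).
    destruct (Rle_or_lt (INR m) (c1 * t0)) as [Hin|Hout].
    + pose proof (Hbehind t0 m Ht0 Hm Hin).
      assert (0 < dl * exp (INR m - c1 * t0)) by (apply Rmult_lt_0_compat; [exact Hdl|apply exp_pos]).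
      lra.
    + assert (1 <= exp (INR m - c1 * t0)) by (rewrite <- exp_0; apply exp_le_mono; lra).
      pose proof (sol_nonneg m t0 Hm ltac:(lra)). nra.
  - intros m Hm. apply cont_0T_minus; [|apply sol_shift_cont; [exact Hm|lra]].
    apply cont_0T_of_continuity. intros s. apply derivable_continuous_pt. eexists.
    apply is_derive_Reals. unfold u, C. auto_derive; [trivial|reflexivity].
  - intros m s Hm Hs Hlt.
    exists (kap * J m - K * (C s * exp (INR m))), (sir_rhs (fun j => I j (s + t0)) m).
    split; [|split; [apply sol_shift_deriv; [exact Hm|lra]|split; [|lra]]].
    + apply is_derive_Reals. unfold u, C. auto_derive; [trivial|ring].
    + pose proof (sol_nonneg m (s + t0) Hm ltac:(lra)).
      apply (sir_rhs_ge_lift J (th0 + kap * s) (C s) kap m HJ Hm); try apply HC.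
      * split; nra.
      * unfold u in Hlt. lra.
      * apply Hgap; [split; nra|exact Hm].
Qed.

Lemma sol_lift_to_stationary (J : nat -> R) (M c c1 dl : R) :
  is_stationary J -> (forall n, (1 <= n)%nat -> J n <= M) -> 0 < c < c1 ->
  0 < dl -> dl <= M / 2 -> (forall n, (1 <= n)%nat -> dl <= J n) ->
  (forall t n, 1 <= t -> (1 <= n)%nat -> INR n <= c1 * t -> dl <= I n t) ->
  forall eps, 0 < eps -> exists T, forall t, T <= t ->
    forall n, (1 <= n)%nat -> INR n <= c * t -> J n - eps <= I n t.
Proof.
  intros HJ HM Hc Hdl HdlM HdlJ Hbehind eps Heps.
  assert (HM0 : 0 < M) by lra.
  set (th0 := dl / M).
  assert (Hth0 : 0 < th0 <= 1 / 2)
    by (unfold th0; split; [apply Rdiv_lt_0_compat|apply Rle_div_l]; lra).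
  assert (Hth0M : th0 * M = dl) by (unfold th0; field; lra).
  set (ep := Rmin (eps / (2 * M)) (1 / 4)).
  assert (Hep : 0 < ep <= 1 / 4)
    by (split; [apply Rmin_pos; [apply Rdiv_lt_0_compat|]; lra|apply Rmin_r]).
  assert (HepM : ep * M <= eps / 2).
  { assert (Hep_l : ep <= eps / (2 * M)) by apply Rmin_l. apply Rle_div_r in Hep_l; lra. }
  set (q := (1 - exp (- tau * dl / 2)) * (1 - exp (- tau * dl / 2))).
  assert (Hq : 0 < q).
  { assert (exp (- tau * dl / 2) < 1) by (rewrite <- exp_0; apply exp_increasing; unfold Rdiv; nra).
    unfold q. nra. }
  assert (Hmin : 0 < Rmin th0 ep) by (apply Rmin_pos; lra).
  set (kap := s0 * Rmin th0 ep * q / M).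
  assert (Hkap : 0 < kap) by (apply Rdiv_lt_0_compat; [apply Rmult_lt_0_compat; [nra|]|]; lra).
  set (Tth := (1 - ep - th0) / kap).
  assert (HTth : 0 < Tth) by (apply Rdiv_lt_0_compat; lra).
  assert (Hend : th0 + kap * Tth = 1 - ep) by (unfold Tth; field; lra).
  assert (Hgap : forall th m, th0 <= th <= th0 + kap * Tth -> (1 <= m)%nat ->
            kap * J m <= freact s0 tau eta (th * J m) - th * freact s0 tau eta (J m)).
  { intros th m Hth Hm. pose proof (HdlJ m Hm). pose proof (HM m Hm).
    apply (freact_concavity_gap_uniform s0 tau eta Hs0 Htau); lra. }
  set (K := s0 * tau + 3 * lam * (INR k + 1)).
  set (Z := K * Tth + c1 * Tth - ln (eps / 2 / dl)).
  exists (Tth + 1 + Rmax 0 (Z / (c1 - c))). intros t Ht n Hn Hnt.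
  pose proof (Rmax_l 0 (Z / (c1 - c))) as HT0. pose proof (Rmax_r 0 (Z / (c1 - c))) as HTZ.
  assert (HZ : Z <= (c1 - c) * (t - Tth - 1)).
  { assert (HZt : Z / (c1 - c) <= t - Tth - 1) by lra. apply Rle_div_l in HZt; lra. }
  pose proof (sol_ge_lift_profile J M c1 dl th0 kap Tth (t - Tth) HJ HM Hbehind Hdl
                ltac:(lra) ltac:(lra) ltac:(lra) ltac:(lra) ltac:(lra) ltac:(lra) Hgap n Hn) as Hlift.
  fold K in Hlift. rewrite Hend in Hlift. replace (Tth + (t - Tth)) with t in Hlift by ring.
  assert (Hsmall : dl * exp (K * Tth) * exp (INR n - c1 * (t - Tth)) <= eps / 2).
  { rewrite Rmult_assoc, <- exp_plus. apply mul_exp_le_of_le_ln; [exact Hdl|lra|].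
    assert ((c1 - c) * (t - Tth - 1) <= (c1 - c) * t) by (apply Rmult_le_compat_l; lra).
    unfold Z in HZ. lra. }
  pose proof (HM n Hn). pose proof (stat_pos J HJ n Hn).
  assert (ep * J n <= eps / 2)
    by (eapply Rle_trans; [apply Rmult_le_compat_l; [lra|eassumption]|exact HepM]).
  lra.
Qed.

Lemma sol_converges_behind (J : nat -> R) (c : R) : (2 <= k)%nat -> repro s0 tau eta > 1 ->
  lam < lambda_c k s0 tau eta -> is_stationary J -> (exists M, forall n, (1 <= n)%nat -> J n <= M) ->
  0 < c < c_star k s0 tau eta lam ->
  forall eps, 0 < eps -> exists T, forall t, T <= t ->
    forall n, (1 <= n)%nat -> INR n <= c * t -> Rabs (I n t - J n) <= eps.
Proof.
  intros Hk Hrepro Hlam_c HJ [M HM] Hc eps Heps.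
  assert (Ha : 0 < s0 * tau - eta).
  { rewrite <- (eta_repro_sub1 s0 tau eta Heta). apply Rmult_lt_0_compat; lra. }
  set (c1 := (c + c_star k s0 tau eta lam) / 2).
  destruct (sol_ge_behind_front c1 ltac:(lia) ltac:(unfold c1; lra) Ha) as [dl [Hdl Hbehind]].
  { intros g Hg. pose proof (c_star_le_speed_fun k s0 tau eta lam Hk Hlam Hlam_c g Hg).
    unfold c1. lra. }
  pose proof (stat_pos J HJ 1 ltac:(lia)). pose proof (HM 1%nat ltac:(lia)).
  set (dl' := Rmin dl (M / 2)).
  assert (Hdl' : 0 < dl') by (apply Rmin_pos; lra).
  assert (Hdl'dl : dl' <= dl) by apply Rmin_l.
  assert (Hdl'M : dl' <= M / 2) by apply Rmin_r.
  assert (HdlJ : forall n, (1 <= n)%nat -> dl' <= J n).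
  { intros n Hn. set (t := 1 + INR n / c1).
    assert (Hc1n : 0 <= INR n / c1) by (apply Rdiv_le_0_compat; [apply pos_INR|unfold c1; lra]).
    assert (Hct : c1 * t = c1 + INR n) by (unfold t; field; unfold c1; lra).
    assert (Hnt : INR n <= c1 * t) by (unfold c1 in Hct |- *; lra).
    assert (Ht1 : 1 <= t) by (unfold t; lra).
    pose proof (Hbehind t n Ht1 Hn Hnt).
    pose proof (sol_le_stationary J HJ n t Hn ltac:(lra)). lra. }
  destruct (sol_lift_to_stationary J M c c1 dl' HJ HM ltac:(unfold c1; lra) Hdl' Hdl'M HdlJ)
    with (eps := eps)
    as [T HT]; [|exact Heps|].
  { intros t n Ht Hn Hnt. pose proof (Hbehind t n Ht Hn Hnt). lra. }
  exists (Rmax 0 T). intros t Ht n Hn Hnt.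
  pose proof (Rmax_l 0 T). pose proof (Rmax_r 0 T).
  pose proof (HT t ltac:(lra) n Hn Hnt).
  pose proof (sol_le_stationary J HJ n t Hn ltac:(lra)).
  apply Rabs_le. lra.
Qed.

End Solution.

End Model.

Theorem theorem8 (k : nat) (s0 i0 tau eta lambda : R)
  (Iinf : nat -> R) (I : nat -> R -> R) :
  (2 <= k)%nat ->
  0 < s0 < 1 -> 0 < i0 < 1 -> 0 < tau -> 0 < eta -> 0 < lambda ->
  repro s0 tau eta > 1 ->
  lambda < lambda_c k s0 tau eta ->
  (* Iinf : the positive bounded stationary solution (indices n >= 1) *)
  (forall n, (1 <= n)%nat -> 0 < Iinf n) ->
  (exists M, forall n, (1 <= n)%nat -> Iinf n <= M) ->
  (forall n, (2 <= n)%nat ->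
     0 = freact s0 tau eta (Iinf n)
         + lambda * (Iinf (n - 1)%nat - (INR k + 1) * Iinf n + INR k * Iinf (S n))) ->
  0 = freact s0 tau eta (Iinf 1%nat) + i0
      + lambda * (INR k + 1) * (- Iinf 1%nat + Iinf 2%nat) ->
  (* I : the (locally-in-time bounded) solution of the Cauchy problem for t >= 0 *)
  (forall T, exists M, forall n t, (1 <= n)%nat -> 0 <= t <= T -> Rabs (I n t) <= M) ->
  (forall n, (1 <= n)%nat -> I n 0 = 0) ->
  (forall n, (1 <= n)%nat -> forall eps, 0 < eps ->
     exists d, 0 < d /\ forall t, 0 <= t < d -> Rabs (I n t - I n 0) < eps) ->
  (forall n t, (2 <= n)%nat -> 0 < t ->
     derivable_pt_lim (I n) t
       (freact s0 tau eta (I n t)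
        + lambda * (I (n - 1)%nat t - (INR k + 1) * I n t + INR k * I (S n) t))) ->
  (forall t, 0 < t ->
     derivable_pt_lim (I 1%nat) t
       (freact s0 tau eta (I 1%nat t) + i0
        + lambda * (INR k + 1) * (- I 1%nat t + I 2%nat t))) ->
  (* (i) *)
  (forall c, 0 < c < c_star k s0 tau eta lambda ->
     forall eps, 0 < eps -> exists T, forall t, T <= t ->
       forall n, (1 <= n)%nat -> INR n <= c * t -> Rabs (I n t - Iinf n) <= eps)
  /\
  (* (ii) *)
  (forall c, c > c_star k s0 tau eta lambda ->
     forall eps, 0 < eps -> exists T, forall t, T <= t ->
       forall n, (1 <= n)%nat -> c * t <= INR n -> Rabs (I n t) <= eps).
Proof.
  intros Hk [Hs0 _] [Hi0 _] Htau Heta Hlam Hrepro Hlam_c HJpos HJbound HJn HJ1 HIbound HI0 HIright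
    HIder HIder1.
  assert (HI : is_solution k s0 i0 tau eta lambda I).
  { constructor; try assumption.
    intros n t Hn Ht. destruct (Nat.eq_dec n 1) as [->|Hn1].
    - rewrite sir_rhs_1. apply HIder1, Ht.
    - rewrite sir_rhs_ge2 by lia. apply HIder; [lia|exact Ht]. }
  assert (HJ : is_stationary k s0 i0 tau eta lambda Iinf).
  { constructor; [exact HJpos|]. intros n Hn. destruct (Nat.eq_dec n 1) as [->|Hn1].
    - rewrite sir_rhs_1. lra.
    - rewrite sir_rhs_ge2 by lia. symmetry. apply HJn. lia. }
  split.
  - intros c Hc.
    exact (sol_converges_behind k s0 i0 tau eta lambda Hs0 Hi0 Htau Heta Hlam I HI Iinf c
             Hk Hrepro Hlam_c HJ HJbound Hc).
  - intros c Hc.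
    exact (sol_vanishes_ahead k s0 i0 tau eta lambda Hs0 Hi0 Htau Heta Hlam I HI c Hk Hlam_c Hc).
Qed.
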